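(* Let $Q$ be as in the context and let $\mathscr B(Q)$ be the collection of all (pairwise distinct) sets $\mathfrak B_\varphi(Q)$, $\varphi$ a scale function, partially ordered by inclusion. Then $(\mathscr B(Q),\subseteq)$ is a lattice, and for all scale functions $\varphi_1,\varphi_2$: (i) $\mathfrak B_{\max(\varphi_1,\varphi_2)}(Q)=\mathfrak B_{\varphi_1}(Q)\cup\mathfrak B_{\varphi_2}(Q)$, and this set is the least element of $\mathscr B(Q)$ containing both $\mathfrak B_{\varphi_1}(Q)$ and $\mathfrak B_{\varphi_2}(Q)$; (ii) $\mathfrak B_{\min(\varphi_1,\varphi_2)}(Q)$ is the greatest element of $\mathscr B(Q)$ contained in both $\mathfrak B_{\varphi_1}(Q)$ and $\mathfrak B_{\varphi_2}(Q)$; in particular $\mathfrak B_{\min(\varphi_1,\varphi_2)}(Q)\subseteq\mathfrak B_{\varphi_1}(Q)\cap\mathfrak B_{\varphi_2}(Q)$.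
   Context: $\mathbb F\in\{\mathbb R,\mathbb C\}$. $A$ is an infinite-dimensional separable Banach space over $\mathbb F$ and $V_0\subsetneq V_1\subsetneq\cdots\subset A$ are finite-dimensional subspaces whose union $V$ is dense in $A$. $B$ is a Banach space over $\mathbb F$, $\alpha$ a reasonable crossnorm on $A\otimes B$, $A\hat\otimes_\alpha B$ the completion, $Q=((A,V);B;\alpha)$. For $x\in A\hat\otimes_\alpha B$, $E_n(x):=\inf_{h\in V_n\otimes B}\|x-h\|$. A scale function is a nonincreasing $\varphi:\mathbb N\to(0,\infty)$ with $\varphi(n)\to0$. $\mathfrak B_\varphi(Q)=\{x:\liminf_{n\to\infty}(E_n(x))^{\varphi(n)}<1\}$. *)

From Stdlib Require Import Reals Lra List ClassicalEpsilon.
Open Scope R_scope.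

Record Cplx := mkC { cre : R; cim : R }.
Definition Cadd (z w : Cplx) := mkC (cre z + cre w) (cim z + cim w).
Definition Cmul (z w : Cplx) :=
  mkC (cre z * cre w - cim z * cim w) (cre z * cim w + cim z * cre w).
Definition Copp (z : Cplx) := mkC (- cre z) (- cim z).
Definition Cabs (z : Cplx) := sqrt (cre z * cre z + cim z * cim z).

Inductive Fld := FR | FC.
Definition scal (F : Fld) : Type := match F with FR => R | FC => Cplx end.
Definition szero (F : Fld) : scal F :=
  match F return scal F with FR => 0 | FC => mkC 0 0 end.
Definition sone (F : Fld) : scal F :=
  match F return scal F with FR => 1 | FC => mkC 1 0 end.
Definition sadd (F : Fld) : scal F -> scal F -> scal F :=
  match F return scal F -> scal F -> scal F with FR => Rplus | FC => Cadd end.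
Definition smul (F : Fld) : scal F -> scal F -> scal F :=
  match F return scal F -> scal F -> scal F with FR => Rmult | FC => Cmul end.
Definition sabs (F : Fld) : scal F -> R :=
  match F return scal F -> R with FR => Rabs | FC => Cabs end.

Arguments sadd {F} _ _.
Arguments smul {F} _ _.
Arguments sabs {F} _.
Record NormedSpace (F : Fld) := {
  vT :> Type;
  vzero : vT;
  vadd : vT -> vT -> vT;
  vopp : vT -> vT;
  vscale : scal F -> vT -> vT;
  vnorm : vT -> R;
  vaddA : forall x y z, vadd x (vadd y z) = vadd (vadd x y) z;
  vaddC : forall x y, vadd x y = vadd y x;
  vadd0 : forall x, vadd x vzero = x;
  vaddN : forall x, vadd x (vopp x) = vzero;
  vscale1 : forall x, vscale (sone F) x = x;
  vscaleA : forall a b x, vscale a (vscale b x) = vscale (smul a b) x;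
  vscaleDr : forall a x y, vscale a (vadd x y) = vadd (vscale a x) (vscale a y);
  vscaleDl : forall a b x, vscale (sadd a b) x = vadd (vscale a x) (vscale b x);
  vnorm_ge0 : forall x, 0 <= vnorm x;
  vnorm_eq0 : forall x, vnorm x = 0 -> x = vzero;
  vnorm_scale : forall a x, vnorm (vscale a x) = sabs a * vnorm x;
  vnorm_triangle : forall x y, vnorm (vadd x y) <= vnorm x + vnorm y
}.
Arguments vT {F} _.
Arguments vzero {F} _.
Arguments vadd {F} _ _ _.
Arguments vopp {F} _ _.
Arguments vscale {F} _ _ _.
Arguments vnorm {F} _ _.

Definition vdist {F} (X : NormedSpace F) (x y : X) : R :=
  vnorm X (vadd X x (vopp X y)).

Definition banach {F} (X : NormedSpace F) : Prop :=
  forall u : nat -> X,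
    (forall eps, 0 < eps -> exists N, forall m n, (N <= m)%nat -> (N <= n)%nat ->
        vdist X (u m) (u n) < eps) ->
    exists l : X, forall eps, 0 < eps -> exists N, forall n, (N <= n)%nat ->
        vdist X (u n) l < eps.

Definition separable {F} (X : NormedSpace F) : Prop :=
  exists d : nat -> X, forall x eps, 0 < eps -> exists n, vdist X x (d n) < eps.

Inductive span {F} (X : NormedSpace F) (l : list X) : X -> Prop :=
| span0 : span X l (vzero X)
| spanS : forall v c y, In v l -> span X l y -> span X l (vadd X (vscale X c v) y).

Definition infinite_dim {F} (X : NormedSpace F) : Prop :=
  forall l : list X, exists x, ~ span X l x.

Definition fin_dim_subspace {F} (X : NormedSpace F) (P : X -> Prop) : Prop :=
  exists l : list X, forall x, P x <-> span X l x.

Definition fd_chain {F} (A : NormedSpace F) (V : nat -> A -> Prop) : Prop :=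
  (forall n, fin_dim_subspace A (V n)) /\
  (forall n x, V n x -> V (S n) x) /\
  (forall n, exists x, V (S n) x /\ ~ V n x).

Definition dense_union {F} (A : NormedSpace F) (V : nat -> A -> Prop) : Prop :=
  forall x eps, 0 < eps -> exists n y, V n y /\ vdist A x y < eps.

(* an element of A (x) B is represented by a finite list [(a_i,b_i)] = sum a_i (x) b_i *)
Definition tens {F} (A B : NormedSpace F) : Type := list (vT A * vT B).

Definition tsum {F} {A B : NormedSpace F} (f : A -> B -> scal F) (u : tens A B)
  : scal F := fold_right (fun p acc => sadd (f (fst p) (snd p)) acc) (szero F) u.

Definition bilinear {F} {A B : NormedSpace F} (f : A -> B -> scal F) : Prop :=
  (forall a1 a2 b, f (vadd A a1 a2) b = sadd (f a1 b) (f a2 b)) /\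
  (forall c a b, f (vscale A c a) b = smul c (f a b)) /\
  (forall a b1 b2, f a (vadd B b1 b2) = sadd (f a b1) (f a b2)) /\
  (forall c a b, f a (vscale B c b) = smul c (f a b)).

(* equality in the algebraic tensor product (universal property) *)
Definition tens_eq {F} {A B : NormedSpace F} (u v : tens A B) : Prop :=
  forall f : A -> B -> scal F, bilinear f -> tsum f u = tsum f v.

Definition tscale {F} {A B : NormedSpace F} (c : scal F) (u : tens A B) : tens A B :=
  map (fun p => (vscale A c (fst p), snd p)) u.

Definition linear_functional {F} (X : NormedSpace F) (f : X -> scal F) : Prop :=
  (forall x y, f (vadd X x y) = sadd (f x) (f y)) /\
  (forall c x, f (vscale X c x) = smul c (f x)).

Definition bounded_by {F} (X : NormedSpace F) (f : X -> scal F) (c : R) : Prop :=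
  forall x, sabs (f x) <= c * vnorm X x.

Definition tensor_norm {F} (A B : NormedSpace F) (alpha : tens A B -> R) : Prop :=
  (forall u v, tens_eq u v -> alpha u = alpha v) /\
  (forall u, 0 <= alpha u) /\
  (forall u, alpha u = 0 -> tens_eq u nil) /\
  (forall c u, alpha (tscale c u) = sabs c * alpha u) /\
  (forall u v, alpha (u ++ v) <= alpha u + alpha v).

(* reasonable crossnorm (Ryan): alpha(a(x)b) <= |a||b| and |f(x)g| <= |f||g| *)
Definition reasonable_crossnorm {F} (A B : NormedSpace F) (alpha : tens A B -> R)
  : Prop :=
  tensor_norm A B alpha /\
  (forall a b, alpha ((a, b) :: nil) <= vnorm A a * vnorm B b) /\
  (forall (f : A -> scal F) (g : B -> scal F) cf cg,
     linear_functional A f -> linear_functional B g ->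
     bounded_by A f cf -> bounded_by B g cg ->
     forall u, sabs (tsum (fun a b => smul (f a) (g b)) u) <= cf * cg * alpha u).

Definition completion {F} (A B : NormedSpace F) (alpha : tens A B -> R)
  (X : NormedSpace F) (iota : tens A B -> X) : Prop :=
  banach X /\
  (forall u v, iota (u ++ v) = vadd X (iota u) (iota v)) /\
  (forall c u, iota (tscale c u) = vscale X c (iota u)) /\
  (forall u, vnorm X (iota u) = alpha u) /\
  (forall x eps, 0 < eps -> exists u, vdist X x (iota u) < eps).

Definition is_glb (S : R -> Prop) (e : R) : Prop :=
  (forall s, S s -> e <= s) /\ (forall m, (forall s, S s -> m <= s) -> m <= e).

Definition Rinf (S : R -> Prop) : R := epsilon (inhabits 0) (is_glb S).

Definition En {F} (A B : NormedSpace F) (V : nat -> A -> Prop)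
  (X : NormedSpace F) (iota : tens A B -> X) (n : nat) (x : X) : R :=
  Rinf (fun r => exists u : tens A B,
          (forall p, In p u -> V n (fst p)) /\ r = vdist X x (iota u)).

(* a^p for a >= 0, p > 0, with the convention 0^p = 0 *)
Definition rpow (a p : R) : R := if Rle_dec a 0 then 0 else Rpower a p.

(* liminf_{n -> oo} u n < c *)
Definition liminf_lt (u : nat -> R) (c : R) : Prop :=
  exists r, r < c /\ forall N, exists n, (N <= n)%nat /\ u n < r.

Definition scale_fn (phi : nat -> R) : Prop :=
  (forall n, 0 < phi n) /\
  (forall m n, (m <= n)%nat -> phi n <= phi m) /\
  (forall eps, 0 < eps -> exists N, forall n, (N <= n)%nat -> phi n < eps).

Definition Bset {F} (A B : NormedSpace F) (V : nat -> A -> Prop)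
  (X : NormedSpace F) (iota : tens A B -> X) (phi : nat -> R) (x : X) : Prop :=
  liminf_lt (fun n => rpow (En A B V X iota n x) (phi n)) 1.

(* Membership of x in B_phi depends only on the sequence E_n(x), and on (0,1) a larger
   exponent gives a smaller power.  Hence psi <= C phi implies B_psi ⊆ B_phi, which yields
   (i) and the inclusions in (ii) at once.  For the greatest-lower-bound property one
   proves the converse: if psi is not O(phi), choose indices m_k with
   (k+1) phi(m_k) < psi(m_k) and put c_k = exp(-1/psi(m_k)).  Bernstein's lethargy
   construction, with Riesz almost-orthogonal vectors a_k in V_(m_(k+1)) and Hahn-Banach
   functionals vanishing on V_(m_(k+1)-1), produces y = sum_k c_k a_k ⊗ b with
   E_n(y) comparable to c_k on the block m_k <= n < m_(k+1); then y lies in B_psi but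
   not in B_phi.  So B_psi ⊆ B_phi1 ∩ B_phi2 forces psi <= C min(phi1, phi2), i.e.
   B_psi ⊆ B_min(phi1,phi2).  If B = 0, every B_phi is the whole space. *)

From Stdlib Require Import Reals Lra Lia List ClassicalEpsilon Classical.
From mathcomp Require classical_sets.
Open Scope R_scope.

Definition emb (F : Fld) (r : R) : scal F :=
  match F return scal F with FR => r | FC => mkC r 0 end.

Definition sre (F : Fld) : scal F -> R :=
  match F return scal F -> R with FR => fun z => z | FC => cre end.

Definition sneg (F : Fld) (z : scal F) : scal F := smul (emb F (-1)) z.

Definition ssub (F : Fld) (a b : scal F) : scal F := sadd a (sneg F b).

Definition sinv (F : Fld) : scal F -> scal F :=
  match F return scal F -> scal F with
  | FR => fun z => / z
  | FC => fun z => mkC (cre z / (cre z * cre z + cim z * cim z))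
                       (- cim z / (cre z * cre z + cim z * cim z)) end.

Lemma Cplx_eq (a b : Cplx) : cre a = cre b -> cim a = cim b -> a = b.
Proof. destruct a, b; simpl; intros; subst; reflexivity. Qed.

Lemma Cabs_ge_re (a b : R) : Rabs a <= Cabs (mkC a b).
Proof.
  unfold Cabs; simpl. rewrite <- sqrt_Rsqr_abs. apply sqrt_le_1_alt.
  unfold Rsqr. nra.
Qed.

Lemma Cabs_ge_im (a b : R) : Rabs b <= Cabs (mkC a b).
Proof.
  unfold Cabs; simpl. rewrite <- sqrt_Rsqr_abs. apply sqrt_le_1_alt.
  unfold Rsqr. nra.
Qed.

Lemma Cabs_le (a b : R) : Cabs (mkC a b) <= Rabs a + Rabs b.
Proof.
  unfold Cabs; simpl. pose proof (Rabs_pos a); pose proof (Rabs_pos b).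
  apply Rsqr_incr_0_var; [|lra]. unfold Rsqr.
  rewrite sqrt_sqrt by nra.
  pose proof (Rsqr_abs a); pose proof (Rsqr_abs b); unfold Rsqr in *. nra.
Qed.

Lemma sabs_emb F r : sabs (emb F r) = Rabs r.
Proof.
  destruct F; simpl; [reflexivity|]. unfold Cabs; simpl.
  replace (r * r + 0 * 0) with (Rsqr r) by (unfold Rsqr; ring).
  apply sqrt_Rsqr_abs.
Qed.

Lemma sabs_ge0 F (z : scal F) : 0 <= sabs z.
Proof. destruct F; simpl; [apply Rabs_pos| apply sqrt_pos]. Qed.

Lemma emb_add F r s : emb F (r + s) = sadd (emb F r) (emb F s).
Proof. destruct F; simpl; [reflexivity|]. unfold Cadd; simpl. f_equal; ring. Qed.

Lemma emb_mul F r s : emb F (r * s) = smul (emb F r) (emb F s).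
Proof. destruct F; simpl; [reflexivity|]. unfold Cmul; simpl. f_equal; ring. Qed.

Lemma emb_one F : emb F 1 = sone F.
Proof. destruct F; reflexivity. Qed.

Lemma emb_zero F : emb F 0 = szero F.
Proof. destruct F; reflexivity. Qed.

Lemma sabs_zero F : sabs (szero F) = 0.
Proof. rewrite <- emb_zero, sabs_emb. apply Rabs_R0. Qed.

Lemma sre_add F (a b : scal F) : sre F (sadd a b) = sre F a + sre F b.
Proof. destruct F; reflexivity. Qed.

Lemma sre_emb F r : sre F (emb F r) = r.
Proof. destruct F; reflexivity. Qed.

Lemma sre_mul_emb F r (z : scal F) : sre F (smul (emb F r) z) = r * sre F z.
Proof. destruct F; simpl; [reflexivity|]. ring. Qed.

Lemma sre_le_abs F (z : scal F) : Rabs (sre F z) <= sabs z.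
Proof. destruct F; simpl; [lra|]. destruct z. apply Cabs_ge_re. Qed.

Lemma sre_zero F : sre F (szero F) = 0.
Proof. destruct F; reflexivity. Qed.

Lemma sre_one F : sre F (sone F) = 1.
Proof. destruct F; reflexivity. Qed.

Lemma smul_one_r F (z : scal F) : smul z (sone F) = z.
Proof. destruct F; simpl; [ring|]. destruct z; unfold Cmul; simpl; f_equal; ring. Qed.

Lemma smul_zero_l F (z : scal F) : smul (szero F) z = szero F.
Proof. destruct F; simpl; [ring|]. unfold Cmul; simpl; f_equal; ring. Qed.

Lemma smul_zero_r F (z : scal F) : smul z (szero F) = szero F.
Proof. destruct F; simpl; [ring|]. unfold Cmul; simpl; f_equal; ring. Qed.

Lemma sadd_zero_l F (z : scal F) : sadd (szero F) z = z.
Proof. destruct F; simpl; [ring|]. destruct z; unfold Cadd; simpl; f_equal; ring. Qed.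

Lemma sadd_zero_r F (z : scal F) : sadd z (szero F) = z.
Proof. destruct F; simpl; [ring|]. destruct z; unfold Cadd; simpl; f_equal; ring. Qed.

Lemma sadd_assoc F (a b c : scal F) : sadd a (sadd b c) = sadd (sadd a b) c.
Proof. destruct F; simpl; [ring|]. unfold Cadd; simpl; f_equal; ring. Qed.

Lemma sadd_neg F (a : scal F) : sadd a (sneg F a) = szero F.
Proof. destruct F; simpl; [ring|]. unfold Cmul, Cadd; simpl; f_equal; ring. Qed.

Lemma sneg_emb F r : sneg F (emb F r) = emb F (- r).
Proof. unfold sneg. rewrite <- emb_mul. f_equal; ring. Qed.

Lemma sadd_self_zero F (z : scal F) : sadd z z = z -> z = szero F.
Proof.
  destruct F; simpl; intro H; [lra|]. destruct z; unfold Cadd in H; simpl in H.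
  injection H; intros; f_equal; lra.
Qed.

Lemma smul_inv F (z : scal F) : z <> szero F -> smul z (sinv F z) = sone F.
Proof.
  destruct F; simpl; intro H.
  - field; auto.
  - destruct z as [a b]; simpl in *. unfold Cmul; simpl.
    assert (a * a + b * b <> 0).
    { intro E. apply H. f_equal; nra. }
    f_equal; field; auto.
Qed.

Lemma ssub_FC (z w : Cplx) : ssub FC z w = mkC (cre z - cre w) (cim z - cim w).
Proof. apply Cplx_eq; simpl; ring. Qed.

Definition scauchy F (c : nat -> scal F) : Prop :=
  forall eps, 0 < eps -> exists N, forall m n, (N <= m)%nat -> (N <= n)%nat ->
    sabs (ssub F (c m) (c n)) < eps.

Definition sconv F (c : nat -> scal F) (l : scal F) : Prop :=
  forall eps, 0 < eps -> exists N, forall n, (N <= n)%nat -> sabs (ssub F (c n) l) < eps.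

Lemma R_cauchy_conv (u : nat -> R) :
  (forall eps, 0 < eps -> exists N, forall m n, (N <= m)%nat -> (N <= n)%nat ->
     Rabs (u m - u n) < eps) ->
  exists l, forall eps, 0 < eps -> exists N, forall n, (N <= n)%nat -> Rabs (u n - l) < eps.
Proof.
  intro H. destruct (R_complete u) as [l Hl].
  { intros eps He. destruct (H eps He) as [N HN]. exists N. intros n m Hn Hm.
    unfold R_dist. apply HN; lia. }
  exists l. intros eps He. destruct (Hl eps He) as [N HN]. exists N. intros n Hn.
  apply HN. lia.
Qed.

Lemma inv_small (eps : R) : 0 < eps -> exists N, forall n, (N <= n)%nat -> / (INR n + 1) < eps.
Proof.
  intro He. destruct (archimed_cor1 eps He) as [N [HN HN0]].
  exists N. intros n Hn. apply le_INR in Hn. apply lt_INR in HN0. simpl in HN0.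
  eapply Rle_lt_trans; [|exact HN]. apply Rinv_le_contravar; lra.
Qed.

Lemma scal_complete F (c : nat -> scal F) : scauchy F c -> exists l, sconv F c l.
Proof.
  unfold scauchy, sconv. destruct F; intro H.
  - assert (Hs : forall x y : R, ssub FR x y = x - y) by (intros; simpl; ring).
    destruct (R_cauchy_conv c) as [l Hl].
    { intros eps He. destruct (H eps He) as [N HN]. exists N. intros m n Hm Hn.
      rewrite <- Hs. apply HN; auto. }
    exists l. intros eps He. destruct (Hl eps He) as [N HN]. exists N. intros n Hn.
    rewrite Hs. apply HN; auto.
  - destruct (R_cauchy_conv (fun n => cre (c n))) as [a Ha].
    { intros eps He. destruct (H eps He) as [N HN]. exists N. intros m n Hm Hn.
      specialize (HN m n Hm Hn). rewrite ssub_FC in HN.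
      eapply Rle_lt_trans; [apply Cabs_ge_re | exact HN]. }
    destruct (R_cauchy_conv (fun n => cim (c n))) as [b Hb].
    { intros eps He. destruct (H eps He) as [N HN]. exists N. intros m n Hm Hn.
      specialize (HN m n Hm Hn). rewrite ssub_FC in HN.
      eapply Rle_lt_trans; [apply Cabs_ge_im | exact HN]. }
    exists (mkC a b). intros eps He.
    destruct (Ha (eps / 2)) as [N1 H1]; [lra|]. destruct (Hb (eps / 2)) as [N2 H2]; [lra|].
    exists (N1 + N2)%nat. intros n Hn.
    specialize (H1 n ltac:(lia)). specialize (H2 n ltac:(lia)).
    rewrite ssub_FC. eapply Rle_lt_trans; [apply Cabs_le|]. simpl. lra.
Qed.

Definition vsub {F} (X : NormedSpace F) (x y : X) : X := vadd X x (vopp X y).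

Definition rscale {F} (X : NormedSpace F) (r : R) (x : X) : X := vscale X (emb F r) x.

Lemma vadd0l {F} (X : NormedSpace F) (x : X) : vadd X (vzero X) x = x.
Proof. rewrite vaddC. apply vadd0. Qed.

Lemma vaddNl {F} (X : NormedSpace F) (x : X) : vadd X (vopp X x) x = vzero X.
Proof. rewrite vaddC. apply vaddN. Qed.

Lemma vadd_cancel_l {F} (X : NormedSpace F) (z x y : X) : vadd X z x = vadd X z y -> x = y.
Proof.
  intro H. rewrite <- (vadd0l X x), <- (vadd0l X y), <- (vaddNl X z), <- !vaddA, H. reflexivity.
Qed.

Lemma vopp_unique {F} (X : NormedSpace F) (x y : X) : vadd X x y = vzero X -> y = vopp X x.
Proof. intro H. apply (vadd_cancel_l X x). rewrite H, vaddN. reflexivity. Qed.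

Lemma vself_zero {F} (X : NormedSpace F) (x : X) : vadd X x x = x -> x = vzero X.
Proof. intro H. apply (vadd_cancel_l X x). rewrite H, vadd0. reflexivity. Qed.

Lemma vscale_zero_s {F} (X : NormedSpace F) (x : X) : vscale X (szero F) x = vzero X.
Proof. apply vself_zero. rewrite <- vscaleDl, sadd_zero_l. reflexivity. Qed.

Lemma vscale_zero_v {F} (X : NormedSpace F) c : vscale X c (vzero X) = vzero X.
Proof. apply vself_zero. rewrite <- vscaleDr, vadd0. reflexivity. Qed.

Lemma vscale_sneg {F} (X : NormedSpace F) c (x : X) : vscale X (sneg F c) x = vopp X (vscale X c x).
Proof.
  apply vopp_unique. rewrite <- vscaleDl, sadd_neg. apply vscale_zero_s.
Qed.

Lemma vscale_m1 {F} (X : NormedSpace F) (x : X) : vscale X (emb F (-1)) x = vopp X x.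
Proof.
  replace (emb F (-1)) with (sneg F (sone F)).
  - rewrite vscale_sneg, vscale1. reflexivity.
  - rewrite <- emb_one, sneg_emb. reflexivity.
Qed.

Lemma vopp_opp {F} (X : NormedSpace F) (x : X) : vopp X (vopp X x) = x.
Proof. symmetry. apply vopp_unique. apply vaddNl. Qed.

Lemma vopp_zero {F} (X : NormedSpace F) : vopp X (vzero X) = vzero X.
Proof. symmetry. apply vopp_unique. apply vadd0. Qed.

Lemma vadd_comm4 {F} (X : NormedSpace F) (a b c d : X) :
  vadd X (vadd X a b) (vadd X c d) = vadd X (vadd X a c) (vadd X b d).
Proof.
  rewrite <- !vaddA. f_equal. rewrite !vaddA. f_equal. apply vaddC.
Qed.

Lemma vopp_add {F} (X : NormedSpace F) (x y : X) : vopp X (vadd X x y) = vadd X (vopp X x) (vopp X y).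
Proof. symmetry. apply vopp_unique. rewrite vadd_comm4, !vaddN, vadd0. reflexivity. Qed.

Lemma vscale_opp {F} (X : NormedSpace F) c (x : X) : vscale X c (vopp X x) = vopp X (vscale X c x).
Proof. apply vopp_unique. rewrite <- vscaleDr, vaddN. apply vscale_zero_v. Qed.

Lemma vnorm0 {F} (X : NormedSpace F) : vnorm X (vzero X) = 0.
Proof. rewrite <- (vscale_zero_s X (vzero X)), vnorm_scale, sabs_zero. ring. Qed.

Lemma vnorm_opp {F} (X : NormedSpace F) (x : X) : vnorm X (vopp X x) = vnorm X x.
Proof. rewrite <- vscale_m1, vnorm_scale, sabs_emb. replace (Rabs (-1)) with 1 by (rewrite Rabs_left; lra). ring. Qed.

Lemma vnorm_rscale {F} (X : NormedSpace F) r (x : X) : vnorm X (rscale X r x) = Rabs r * vnorm X x.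
Proof. unfold rscale. rewrite vnorm_scale, sabs_emb. reflexivity. Qed.

Lemma vsub_opp {F} (X : NormedSpace F) (x y : X) : vopp X (vsub X x y) = vsub X y x.
Proof. unfold vsub. rewrite vopp_add, vopp_opp, vaddC. reflexivity. Qed.

Lemma vsub_chain {F} (X : NormedSpace F) (x y z : X) :
  vsub X x z = vadd X (vsub X x y) (vsub X y z).
Proof.
  unfold vsub. rewrite <- vaddA. f_equal. rewrite vaddA, vaddNl, vadd0l. reflexivity.
Qed.

Lemma vdist_sym {F} (X : NormedSpace F) (x y : X) : vdist X x y = vdist X y x.
Proof. unfold vdist. fold (vsub X x y). fold (vsub X y x). rewrite <- vsub_opp, vnorm_opp. reflexivity. Qed.

Lemma vdist_tri {F} (X : NormedSpace F) (x y z : X) : vdist X x z <= vdist X x y + vdist X y z.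
Proof.
  unfold vdist. fold (vsub X x z). fold (vsub X x y). fold (vsub X y z).
  rewrite (vsub_chain X x y z). apply vnorm_triangle.
Qed.

Lemma vdist_ge0 {F} (X : NormedSpace F) (x y : X) : 0 <= vdist X x y.
Proof. apply vnorm_ge0. Qed.

Lemma vdist_self {F} (X : NormedSpace F) (x : X) : vdist X x x = 0.
Proof. unfold vdist. rewrite vaddN. apply vnorm0. Qed.

Lemma vdist_eq0 {F} (X : NormedSpace F) (x y : X) : vdist X x y = 0 -> x = y.
Proof.
  unfold vdist. intro H. apply vnorm_eq0 in H. apply vopp_unique in H.
  rewrite <- (vopp_opp X y), H, vopp_opp. reflexivity.
Qed.

Lemma vnorm_dist0 {F} (X : NormedSpace F) (x : X) : vdist X x (vzero X) = vnorm X x.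
Proof. unfold vdist. rewrite vopp_zero, vadd0. reflexivity. Qed.

Lemma vdist_add2 {F} (X : NormedSpace F) (a b c d : X) :
  vdist X (vadd X a b) (vadd X c d) <= vdist X a c + vdist X b d.
Proof.
  unfold vdist. rewrite vopp_add, vadd_comm4. apply vnorm_triangle.
Qed.

Lemma vdist_scale {F} (X : NormedSpace F) c (x y : X) :
  vdist X (vscale X c x) (vscale X c y) = sabs c * vdist X x y.
Proof. unfold vdist. rewrite <- vscale_opp, <- vscaleDr, vnorm_scale. reflexivity. Qed.

Lemma vdist_scale_l {F} (X : NormedSpace F) c d (x : X) :
  vdist X (vscale X c x) (vscale X d x) = sabs (ssub F c d) * vnorm X x.
Proof. unfold vdist, ssub. rewrite <- vscale_sneg, <- vscaleDl, vnorm_scale. reflexivity. Qed.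

Lemma vsub_decomp {F} (X : NormedSpace F) (a b v : X) c d :
  vsub X (vadd X a (vscale X c v)) (vadd X b (vscale X d v)) =
  vadd X (vsub X a b) (vscale X (ssub F c d) v).
Proof.
  unfold vsub, ssub. rewrite vopp_add, vadd_comm4. f_equal.
  rewrite vscaleDl, vscale_sneg. reflexivity.
Qed.

Lemma rscale_add_l {F} (X : NormedSpace F) r s (x : X) : rscale X (r + s) x = vadd X (rscale X r x) (rscale X s x).
Proof. unfold rscale. rewrite emb_add. apply vscaleDl. Qed.

Lemma rscale_add_r {F} (X : NormedSpace F) r (x y : X) : rscale X r (vadd X x y) = vadd X (rscale X r x) (rscale X r y).
Proof. apply vscaleDr. Qed.

Lemma rscale_mul {F} (X : NormedSpace F) r s (x : X) : rscale X r (rscale X s x) = rscale X (r * s) x.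
Proof. unfold rscale. rewrite vscaleA, emb_mul. reflexivity. Qed.

Lemma rscale_one {F} (X : NormedSpace F) (x : X) : rscale X 1 x = x.
Proof. unfold rscale. rewrite emb_one. apply vscale1. Qed.

Lemma rscale_zero {F} (X : NormedSpace F) (x : X) : rscale X 0 x = vzero X.
Proof. unfold rscale. rewrite emb_zero. apply vscale_zero_s. Qed.

Lemma rscale_m1 {F} (X : NormedSpace F) (x : X) : rscale X (-1) x = vopp X x.
Proof. apply vscale_m1. Qed.

Definition subspace {F} (X : NormedSpace F) (W : X -> Prop) : Prop :=
  W (vzero X) /\ (forall x y, W x -> W y -> W (vadd X x y)) /\
  (forall c x, W x -> W (vscale X c x)).

Definition closedP {F} (X : NormedSpace F) (W : X -> Prop) : Prop :=
  forall x, (forall eps, 0 < eps -> exists w, W w /\ vdist X x w < eps) -> W x.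

Lemma span_add {F} (X : NormedSpace F) l (x y : X) : span X l x -> span X l y -> span X l (vadd X x y).
Proof.
  intros Hx Hy. induction Hx.
  - rewrite vadd0l. auto.
  - rewrite <- vaddA. apply spanS; auto.
Qed.

Lemma span_scale {F} (X : NormedSpace F) l c (x : X) : span X l x -> span X l (vscale X c x).
Proof.
  intros Hx. induction Hx.
  - rewrite vscale_zero_v. constructor.
  - rewrite vscaleDr, vscaleA. apply spanS; auto.
Qed.

Lemma span_subspace {F} (X : NormedSpace F) l : subspace X (span X l).
Proof. split; [constructor|split]; intros; [apply span_add|apply span_scale]; auto. Qed.

Lemma span_mono {F} (X : NormedSpace F) l l' (x : X) : incl l l' -> span X l x -> span X l' x.
Proof. intros Hi Hx. induction Hx; constructor; auto. Qed.

Lemma subspace_opp {F} (X : NormedSpace F) W (x : X) : subspace X W -> W x -> W (vopp X x).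
Proof. intros [H0 [Ha Hs]] Hx. rewrite <- vscale_m1. auto. Qed.

Lemma subspace_sub {F} (X : NormedSpace F) W (x y : X) : subspace X W -> W x -> W y -> W (vsub X x y).
Proof. intros HW Hx Hy. pose proof HW as [H0 [Ha Hs]]. apply Ha; auto. apply subspace_opp; auto. Qed.

Lemma span_cons_decomp {F} (X : NormedSpace F) v l (z : X) :
  span X (v :: l) z -> exists c w, span X l w /\ z = vadd X w (vscale X c v).
Proof.
  intro H. induction H as [|v' c y Hin Hy IH].
  - exists (szero F), (vzero X). split; [constructor|]. rewrite vscale_zero_s, vadd0. reflexivity.
  - destruct IH as [d [w [Hw E]]]. subst y. destruct Hin as [E|Hin].
    + subst v'. exists (sadd c d), w. split; auto.
      rewrite vscaleDl, vaddA, (vaddC _ X (vscale X c v) w), <- vaddA. reflexivity.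
    + exists d, (vadd X (vscale X c v') w). split; [apply spanS; auto|].
      rewrite vaddA. reflexivity.
Qed.

Lemma span_cons_intro {F} (X : NormedSpace F) v l c (w : X) :
  span X l w -> span X (v :: l) (vadd X w (vscale X c v)).
Proof.
  intro Hw. rewrite vaddC. apply spanS; [left; auto|]. eapply span_mono; [|exact Hw].
  intros a Ha; right; auto.
Qed.

Lemma closed_dist_pos {F} (X : NormedSpace F) W (x : X) :
  closedP X W -> ~ W x -> exists d, 0 < d /\ forall w, W w -> d <= vdist X x w.
Proof.
  intros Hc Hn. apply NNPP. intro Hno. apply Hn, Hc. intros eps He.
  apply NNPP. intro H2. apply Hno. exists eps. split; auto. intros w Hw.
  apply Rnot_lt_le. intro Hlt. apply H2. exists w; auto.
Qed.

Lemma norm_comb_ge {F} (X : NormedSpace F) W (v : X) d :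
  subspace X W -> (forall w, W w -> d <= vdist X v w) ->
  forall w c, W w -> sabs c * d <= vnorm X (vadd X w (vscale X c v)).
Proof.
  intros HW Hd w c Hw.
  destruct (classic (c = szero F)) as [E|Hc].
  - subst. rewrite sabs_zero, Rmult_0_l. apply vnorm_ge0.
  - assert (E : vadd X w (vscale X c v) = vscale X c (vadd X v (vscale X (sinv F c) w))).
    { rewrite vscaleDr, vscaleA, smul_inv by auto. rewrite vscale1, vaddC. reflexivity. }
    rewrite E, vnorm_scale. apply Rmult_le_compat_l; [apply sabs_ge0|].
    specialize (Hd (vopp X (vscale X (sinv F c) w))).
    unfold vdist in Hd. rewrite vopp_opp in Hd. apply Hd, subspace_opp; auto.
    apply HW; auto.
Qed.

Lemma vdist_comb_shift {F} (X : NormedSpace F) (x w v : X) c c0 :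
  vdist X (vsub X x (vscale X c0 v)) w <=
  vdist X x (vadd X w (vscale X c v)) + sabs (ssub F c c0) * vnorm X v.
Proof.
  set (z := vadd X w (vscale X c v)).
  assert (Ew : w = vsub X z (vscale X c v)).
  { unfold z, vsub. rewrite <- vaddA, vaddN, vadd0. reflexivity. }
  rewrite vdist_sym, Ew. unfold vsub. eapply Rle_trans; [apply vdist_add2|].
  rewrite <- !vscale_m1, vdist_scale, sabs_emb, vdist_scale_l, (vdist_sym X z x).
  replace (Rabs (-1)) with 1 by (rewrite Rabs_left; lra). lra.
Qed.

Lemma span_cons_absorb {F} (X : NormedSpace F) v l (z : X) :
  span X l v -> span X (v :: l) z -> span X l z.
Proof.
  intros Hv Hz. destruct (span_cons_decomp X v l z Hz) as [c [w [Hw E]]]. subst.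
  apply span_add; auto. apply span_scale; auto.
Qed.

(* Coefficients along v converge because v keeps distance d from W. *)
Lemma comb_coeff_cauchy {F} (X : NormedSpace F) W (v x : X) d (c : nat -> scal F)
  (w : nat -> X) :
  subspace X W -> 0 < d -> (forall z, W z -> d <= vdist X v z) ->
  (forall n, W (w n) /\ vdist X x (vadd X (w n) (vscale X (c n) v)) < / (INR n + 1)) ->
  scauchy F c.
Proof.
  intros HW Hd Hdist Hcw eps He.
  destruct (inv_small (eps * d / 2)) as [N HN].
  { apply Rmult_lt_0_compat; [apply Rmult_lt_0_compat|]; lra. }
  exists N. intros m n Hm Hn.
  destruct (Hcw m) as [Hwm Hdm]. destruct (Hcw n) as [Hwn Hdn].
  pose proof (norm_comb_ge X W v d HW Hdist (vsub X (w m) (w n)) (ssub F (c m) (c n))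
                (subspace_sub X _ _ _ HW Hwm Hwn)) as K.
  rewrite <- vsub_decomp in K. change (vnorm X (vsub X ?a ?b)) with (vdist X a b) in K.
  pose proof (vdist_tri X (vadd X (w m) (vscale X (c m) v)) x
                (vadd X (w n) (vscale X (c n) v))) as T.
  rewrite (vdist_sym X _ x) in T.
  pose proof (HN m Hm). pose proof (HN n Hn).
  apply Rmult_lt_reg_r with d; auto. lra.
Qed.

Lemma span_cons_closed {F} (X : NormedSpace F) v l :
  closedP X (span X l) -> ~ span X l v -> closedP X (span X (v :: l)).
Proof.
  intros Hl Hv x Hx.
  destruct (closed_dist_pos X (span X l) v Hl Hv) as [d [Hd Hdist]].
  assert (Happrox : forall n : nat, exists p : scal F * X, span X l (snd p) /\
            vdist X x (vadd X (snd p) (vscale X (fst p) v)) < / (INR n + 1)).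
  { intro n. destruct (Hx (/ (INR n + 1))) as [z [Hz Hxz]].
    { apply Rinv_0_lt_compat. pose proof (pos_INR n). lra. }
    destruct (span_cons_decomp X v l z Hz) as [c [w [Hw E]]]. exists (c, w). subst. auto. }
  destruct (choice _ Happrox) as [p Hp].
  set (c := fun n => fst (p n)). set (w := fun n => snd (p n)).
  assert (Hcw : forall n, span X l (w n) /\
            vdist X x (vadd X (w n) (vscale X (c n) v)) < / (INR n + 1)) by exact Hp.
  destruct (scal_complete F c (comb_coeff_cauchy X _ v x d c w (span_subspace X l) Hd Hdist Hcw))
    as [c0 Hc0].
  assert (Hrest : span X l (vsub X x (vscale X c0 v))).
  { apply Hl. intros eps He.
    destruct (inv_small (eps / 2)) as [N1 HN1]; [lra|].
    pose proof (vnorm_ge0 _ X v) as Hv0.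
    destruct (Hc0 (eps / (2 * (vnorm X v + 1)))) as [N2 HN2].
    { apply Rdiv_lt_0_compat; lra. }
    set (n := (N1 + N2)%nat). destruct (Hcw n) as [Hwn Hdn]. exists (w n). split; auto.
    specialize (HN1 n ltac:(unfold n; lia)). specialize (HN2 n ltac:(unfold n; lia)).
    eapply Rle_lt_trans; [apply (vdist_comb_shift X x (w n) v (c n) c0)|].
    assert (sabs (ssub F (c n) c0) * vnorm X v <= eps / 2).
    { pose proof (sabs_ge0 F (ssub F (c n) c0)).
      apply Rle_trans with (eps / (2 * (vnorm X v + 1)) * (vnorm X v + 1)); [nra|].
      right. field. lra. }
    lra. }
  replace x with (vadd X (vsub X x (vscale X c0 v)) (vscale X c0 v)).
  - apply span_cons_intro; auto.
  - unfold vsub. rewrite <- vaddA, vaddNl, vadd0. reflexivity.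
Qed.

Lemma span_nil_closed {F} (X : NormedSpace F) : closedP X (span X nil).
Proof.
  intros x Hx. replace x with (vzero X); [constructor|].
  symmetry. apply vdist_eq0, Rle_antisym; [|apply vdist_ge0].
  apply Rnot_lt_le. intro Hp. destruct (Hx _ Hp) as [w [Hw Hd]].
  inversion Hw; [subst; lra | contradiction].
Qed.

Lemma span_closed {F} (X : NormedSpace F) l : closedP X (span X l).
Proof.
  induction l as [|v l IH]; [apply span_nil_closed|].
  destruct (classic (span X l v)) as [Hv|Hv]; [|apply span_cons_closed; auto].
  intros x Hx. eapply span_mono; [intros a Ha; right; exact Ha|]. apply IH.
  intros eps He. destruct (Hx eps He) as [w [Hw Hd]].
  exists w. split; auto. eapply span_cons_absorb; eauto.
Qed.

Lemma zorn_union (T : Type) (P : (T -> Prop) -> Prop) :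
  (forall Fam : (T -> Prop) -> Prop, (forall G, Fam G -> P G) ->
     (forall G H, Fam G -> Fam H -> (forall t, G t -> H t) \/ (forall t, H t -> G t)) ->
     P (fun t => exists G, Fam G /\ G t)) ->
  exists A, P A /\ forall B, (forall t, A t -> B t) -> (exists t, B t /\ ~ A t) -> ~ P B.
Proof.
  intro H. destruct (@classical_sets.Zorn_bigcup T P) as [A [HA HB]].
  - intros Fam HF Htot.
    replace (classical_sets.bigcup Fam (fun X => X)) with (fun t => exists G, Fam G /\ G t).
    + apply H; [exact HF|]. intros G K HG HK. exact (Htot G K HG HK).
    + apply boolp.functional_extensionality_dep. intro t. apply boolp.propositional_extensionality.
      unfold classical_sets.bigcup. simpl. split.
      * intros [G [HG Gt]]. exists G; auto.
      * intros [G HG Gt]. exists G; auto.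
  - exists A. split; auto. intros B HAB [t [Bt nAt]]. apply HB. split.
    + exact HAB.
    + intro K. apply nAt. apply K. exact Bt.
Qed.

Definition span_graph {F} (X : NormedSpace F) (W : X -> Prop) (a : X) (p : X * R) : Prop :=
  exists w c, W w /\ p = (vadd X w (vscale X c a), sre F c).

(* Graphs of real-linear functionals on real subspaces that extend [w + c a |-> Re c]
   (w in W) and are dominated by [K * norm]; Zorn's lemma is applied to them. *)
Definition dominated_graph {F} (X : NormedSpace F) (W : X -> Prop) (a : X) (K : R)
  (G : X * R -> Prop) : Prop :=
  (forall p, span_graph X W a p -> G p) /\
  (forall x s y t, G (x, s) -> G (y, t) -> G (vadd X x y, s + t)) /\
  (forall r x s, G (x, s) -> G (rscale X r x, r * s)) /\
  (forall x s, G (x, s) -> s <= K * vnorm X x).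

Lemma span_graph_dominated {F} (X : NormedSpace F) W a K :
  subspace X W -> (forall w c, W w -> sabs c <= K * vnorm X (vadd X w (vscale X c a))) ->
  dominated_graph X W a K (span_graph X W a).
Proof.
  intros HW Hb. pose proof HW as [H0 [Ha Hs]]. split; [auto|split; [|split]].
  - intros x s y t [w1 [c1 [Hw1 E1]]] [w2 [c2 [Hw2 E2]]]. injection E1; injection E2; intros; subst.
    exists (vadd X w1 w2), (sadd c1 c2). split; auto. f_equal.
    + rewrite vadd_comm4, vscaleDl. reflexivity.
    + rewrite sre_add. reflexivity.
  - intros r x s [w [c [Hw E]]]. injection E; intros; subst.
    exists (rscale X r w), (smul (emb F r) c). split; [unfold rscale; auto|]. f_equal.
    + unfold rscale. rewrite vscaleDr, vscaleA. reflexivity.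
    + rewrite sre_mul_emb. reflexivity.
  - intros x s [w [c [Hw E]]]. injection E; intros; subst.
    eapply Rle_trans; [|apply Hb; auto]. pose proof (sre_le_abs F c).
    pose proof (Rle_abs (sre F c)). lra.
Qed.

Lemma dominated_graph_functional {F} (X : NormedSpace F) W a K G x s t :
  dominated_graph X W a K G -> G (x, s) -> G (x, t) -> s = t.
Proof.
  intros [_ [Hadd [Hsc Hd]]] Hs Ht.
  assert (Hle : forall s t, G (x, s) -> G (x, t) -> s <= t).
  { intros s' t' Hs' Ht'. pose proof (Hd _ _ (Hadd _ _ _ _ Hs' (Hsc (-1) x t' Ht'))) as D.
    rewrite rscale_m1, vaddN, vnorm0 in D. lra. }
  apply Rle_antisym; auto.
Qed.

Lemma dominated_graph_maximal {F} (X : NormedSpace F) W a K :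
  subspace X W -> (forall w c, W w -> sabs c <= K * vnorm X (vadd X w (vscale X c a))) ->
  exists G, dominated_graph X W a K G /\
    forall G', dominated_graph X W a K G' -> (forall p, G p -> G' p) -> forall p, G' p -> G p.
Proof.
  intros HW Hb.
  set (P := fun G : X * R -> Prop => (forall p, ~ G p) \/ dominated_graph X W a K G).
  destruct (zorn_union _ P) as [G [PG Gmax]].
  { intros Fam HF Htot.
    destruct (classic (exists G p, Fam G /\ G p)) as [[G1 [p1 [HG1 Gp1]]]|Hno].
    2: { left. intros p [G [HG Gp]]. apply Hno. exists G, p. auto. }
    right.
    assert (HP : forall G p, Fam G -> G p -> dominated_graph X W a K G).
    { intros G p HG Gp. destruct (HF G HG) as [E|E]; auto. exfalso; eapply E; eauto. }
    split; [|split; [|split]].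
    - intros p Hp. exists G1. split; auto. apply (HP G1 p1 HG1 Gp1). auto.
    - intros x s y t [G [HG Gx]] [H [HH Hy]].
      destruct (Htot G H HG HH) as [S|S].
      + exists H. split; auto. apply (HP H _ HH Hy); auto.
      + exists G. split; auto. apply (HP G _ HG Gx); auto.
    - intros r x s [G [HG Gx]]. exists G. split; auto. apply (HP G _ HG Gx); auto.
    - intros x s [G [HG Gx]]. apply (HP G _ HG Gx); auto. }
  assert (HG : dominated_graph X W a K G).
  { destruct PG as [E|E]; auto. exfalso.
    apply (Gmax (span_graph X W a)).
    - intros t Gt. exfalso; eapply E; eauto.
    - exists (vzero X, 0). split; [|exact (E _)].
      exists (vzero X), (szero F). split; [apply HW|].
      rewrite vscale_zero_s, vadd0, sre_zero. reflexivity.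
    - right. apply span_graph_dominated; auto. }
  exists G. split; auto. intros G' HG' Hsub p Hp. apply NNPP. intro Hn.
  apply (Gmax G' Hsub); [exists p; auto | right; exact HG'].
Qed.

Lemma dominated_graph_gap {F} (X : NormedSpace F) W a K G x0 :
  0 <= K -> dominated_graph X W a K G -> G (vzero X, 0) ->
  exists t0, (forall z s, G (z, s) -> s - K * vnorm X (vsub X z x0) <= t0) /\
             (forall z s, G (z, s) -> t0 <= K * vnorm X (vadd X z x0) - s).
Proof.
  intros HK [_ [Hadd [_ Hd]]] G00.
  assert (key : forall z1 s1 z2 s2, G (z1, s1) -> G (z2, s2) ->
             s1 - K * vnorm X (vsub X z1 x0) <= K * vnorm X (vadd X z2 x0) - s2).
  { intros z1 s1 z2 s2 H1 H2. pose proof (Hd _ _ (Hadd _ _ _ _ H1 H2)) as D.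
    assert (E : vadd X z1 z2 = vadd X (vsub X z1 x0) (vadd X z2 x0)).
    { unfold vsub. rewrite vadd_comm4, vaddNl, vadd0. reflexivity. }
    rewrite E in D. pose proof (vnorm_triangle _ X (vsub X z1 x0) (vadd X z2 x0)). nra. }
  set (S := fun v => exists z s, G (z, s) /\ v = s - K * vnorm X (vsub X z x0)).
  destruct (completeness S) as [t0 [Hub Hlub]].
  { exists (K * vnorm X (vadd X (vzero X) x0) - 0). intros v [z [s [Hz E]]]. subst. apply key; auto. }
  { exists (0 - K * vnorm X (vsub X (vzero X) x0)). exists (vzero X), 0. auto. }
  exists t0. split.
  - intros z s Hz. apply Hub. exists z, s; auto.
  - intros z s Hz. apply Hlub. intros v [z1 [s1 [Hz1 E]]]. subst. apply key; auto.
Qed.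

Lemma dominated_extension_bound {F} (X : NormedSpace F) W a K G x0 t0 :
  dominated_graph X W a K G ->
  (forall z s, G (z, s) -> s - K * vnorm X (vsub X z x0) <= t0) ->
  (forall z s, G (z, s) -> t0 <= K * vnorm X (vadd X z x0) - s) ->
  forall z s r, G (z, s) -> s + r * t0 <= K * vnorm X (vadd X z (rscale X r x0)).
Proof.
  intros [_ [_ [Hsc Hd]]] HL HU z s r Hz.
  destruct (Rtotal_order r 0) as [Hr|[Hr|Hr]].
  - set (q := - r). assert (Hq : 0 < q) by (unfold q; lra).
    pose proof (HL _ _ (Hsc (/ q) z s Hz)) as L.
    assert (E : vnorm X (vsub X (rscale X (/ q) z) x0) * q = vnorm X (vadd X z (rscale X r x0))).
    { transitivity (vnorm X (rscale X q (vsub X (rscale X (/ q) z) x0))).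
      { rewrite vnorm_rscale, (Rabs_right q) by lra. ring. }
      f_equal. unfold vsub. rewrite rscale_add_r, rscale_mul, Rinv_r by lra.
      rewrite rscale_one, <- rscale_m1, rscale_mul. do 2 f_equal. unfold q; ring. }
    set (N := vnorm X (vsub X (rscale X (/ q) z) x0)) in *.
    assert (L2 : s - K * (N * q) <= t0 * q).
    { replace (s - K * (N * q)) with ((/ q * s - K * N) * q) by (field; lra).
      apply Rmult_le_compat_r; lra. }
    rewrite E in L2. unfold q in L2. lra.
  - subst r. rewrite rscale_zero, vadd0. replace (s + 0 * t0) with s by ring. auto.
  - pose proof (HU _ _ (Hsc (/ r) z s Hz)) as U.
    assert (E : vnorm X (vadd X (rscale X (/ r) z) x0) * r = vnorm X (vadd X z (rscale X r x0))).
    { transitivity (vnorm X (rscale X r (vadd X (rscale X (/ r) z) x0))).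
      { rewrite vnorm_rscale, (Rabs_right r) by lra. ring. }
      f_equal. rewrite rscale_add_r, rscale_mul, Rinv_r by lra. rewrite rscale_one. reflexivity. }
    set (N := vnorm X (vadd X (rscale X (/ r) z) x0)) in *.
    assert (U2 : t0 * r <= K * (N * r) - s).
    { replace (K * (N * r) - s) with ((K * N - / r * s) * r) by (field; lra).
      apply Rmult_le_compat_r; lra. }
    rewrite E in U2. lra.
Qed.

Lemma dominated_graph_extend {F} (X : NormedSpace F) W a K G x0 :
  0 <= K -> dominated_graph X W a K G -> G (vzero X, 0) ->
  exists t G', dominated_graph X W a K G' /\ (forall p, G p -> G' p) /\ G' (x0, t).
Proof.
  intros HK HG G00. destruct (dominated_graph_gap X W a K G x0 HK HG G00) as [t0 [HL HU]].
  pose proof (dominated_extension_bound X W a K G x0 t0 HG HL HU) as Hbound.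
  set (G' := fun p : X * R =>
         exists z s r, G (z, s) /\ p = (vadd X z (rscale X r x0), s + r * t0)).
  assert (HGG' : forall p, G p -> G' p).
  { intros [z s] Hp. exists z, s, 0. split; auto. rewrite rscale_zero, vadd0. f_equal; ring. }
  exists t0, G'. split; [|split; auto].
  - destruct HG as [PG0 [Hadd [Hsc Hd]]]. split; [|split; [|split]].
    + intros p Hp. apply HGG', PG0, Hp.
    + intros x s y t [z1 [s1 [r1 [H1 E1]]]] [z2 [s2 [r2 [H2 E2]]]].
      injection E1; injection E2; intros; subst.
      exists (vadd X z1 z2), (s1 + s2), (r1 + r2). split; auto. f_equal.
      * rewrite vadd_comm4, rscale_add_l. reflexivity.
      * ring.
    + intros q x s [z [s1 [r [H1 E1]]]]. injection E1; intros; subst.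
      exists (rscale X q z), (q * s1), (q * r). split; auto. f_equal.
      * rewrite rscale_add_r, rscale_mul. reflexivity.
      * ring.
    + intros x s [z [s1 [r [H1 E1]]]]. injection E1; intros; subst. auto.
  - exists (vzero X), 0, 1. split; auto. rewrite rscale_one, vadd0l. f_equal; ring.
Qed.

Lemma real_hahn_banach {F} (X : NormedSpace F) (W : X -> Prop) (a : X) (K : R) :
  0 <= K -> subspace X W ->
  (forall w c, W w -> sabs c <= K * vnorm X (vadd X w (vscale X c a))) ->
  exists u : X -> R,
    (forall x y, u (vadd X x y) = u x + u y) /\
    (forall r x, u (rscale X r x) = r * u x) /\
    (forall x, Rabs (u x) <= K * vnorm X x) /\
    (forall w c, W w -> u (vadd X w (vscale X c a)) = sre F c).
Proof.
  intros HK HW Hb.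
  destruct (dominated_graph_maximal X W a K HW Hb) as [G [HG Gmax]].
  assert (G00 : G (vzero X, 0)).
  { apply HG. exists (vzero X), (szero F). split; [apply HW|].
    rewrite vscale_zero_s, vadd0, sre_zero. reflexivity. }
  assert (Tot : forall x, exists t, G (x, t)).
  { intro x0. destruct (dominated_graph_extend X W a K G x0 HK HG G00) as [t [G' [HG' [Hsub Hx0]]]].
    exists t. exact (Gmax G' HG' Hsub _ Hx0). }
  destruct (choice _ Tot) as [u Hu].
  pose proof HG as [PG0 [Hadd [Hsc Hd]]].
  exists u. split; [|split; [|split]].
  - intros x y. eapply dominated_graph_functional; [exact HG | apply Hu | apply Hadd; apply Hu].
  - intros r x. eapply dominated_graph_functional; [exact HG | apply Hu | apply Hsc; apply Hu].
  - intro x. apply Rabs_le. split.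
    + pose proof (Hd _ _ (Hsc (-1) x (u x) (Hu x))) as D. rewrite rscale_m1, vnorm_opp in D. lra.
    + apply Hd, Hu.
  - intros w c Hw. eapply dominated_graph_functional; [exact HG | apply Hu | apply PG0].
    exists w, c. auto.
Qed.

(* A complex functional is recovered from its real part u as x |-> u x - i u (i x). *)
Lemma complexified_functional (X : NormedSpace FC) (u : X -> R) (K : R) :
  (forall x y, u (vadd X x y) = u x + u y) -> (forall r x, u (rscale X r x) = r * u x) ->
  (forall x, Rabs (u x) <= K * vnorm X x) ->
  linear_functional X (fun x => mkC (u x) (- u (vscale X (mkC 0 1) x))) /\
  bounded_by X (fun x => mkC (u x) (- u (vscale X (mkC 0 1) x))) (2 * K).
Proof.
  intros Hadd Hsc Hbd. set (i := mkC 0 1).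
  assert (Hu : forall (c : Cplx) (x : X), u (vscale X c x) = cre c * u x + cim c * u (vscale X i x)).
  { intros [p q] x.
    replace (vscale X (mkC p q) x) with (vadd X (rscale X p x) (rscale X q (vscale X i x))).
    - rewrite Hadd, !Hsc. reflexivity.
    - unfold rscale. rewrite vscaleA, <- vscaleDl. f_equal. apply Cplx_eq; simpl; ring. }
  split; [split|].
  - intros x y. simpl. unfold Cadd. simpl. rewrite vscaleDr, !Hadd. f_equal; ring.
  - intros [p q] x. rewrite vscaleA. change (@smul FC i (mkC p q)) with (Cmul i (mkC p q)).
    rewrite (Hu (mkC p q) x), (Hu (Cmul i (mkC p q)) x).
    apply Cplx_eq; cbn [cre cim smul Cmul i]; ring.
  - intro x. simpl. eapply Rle_trans; [apply Cabs_le|].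
    pose proof (Hbd x). pose proof (Hbd (vscale X i x)) as Hi.
    rewrite vnorm_scale in Hi. simpl in Hi.
    replace (Cabs i) with 1 in Hi.
    + rewrite Rabs_Ropp. lra.
    + unfold Cabs, i; simpl. replace (0 * 0 + 1 * 1) with 1 by ring. symmetry; apply sqrt_1.
Qed.

Lemma hahn_banach_point {F} (X : NormedSpace F) (W : X -> Prop) (a : X) (K : R) :
  0 <= K -> subspace X W ->
  (forall w c, W w -> sabs c <= K * vnorm X (vadd X w (vscale X c a))) ->
  exists f : X -> scal F, linear_functional X f /\ bounded_by X f (2 * K) /\
    (forall w, W w -> f w = szero F) /\ f a = sone F.
Proof.
  intros HK HW Hb.
  destruct (real_hahn_banach X W a K HK HW Hb) as [u [Hadd [Hsc [Hbd Hval]]]].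
  assert (Hw0 : forall w, W w -> u w = 0).
  { intros w Hw. rewrite <- (vadd0 _ X w), <- (vscale_zero_s X a), Hval by auto.
    apply sre_zero. }
  assert (Ha1 : u a = 1).
  { rewrite <- (vadd0l X a), <- (vscale1 _ X a), Hval by apply HW. apply sre_one. }
  destruct F.
  - exists u. split; [split|split; [|split]]; auto.
    intro x. simpl. pose proof (Hbd x). pose proof (vnorm_ge0 _ X x). nra.
  - destruct (complexified_functional X u K Hadd Hsc Hbd) as [Hlin Hbound].
    exists (fun x => mkC (u x) (- u (vscale X (mkC 0 1) x))). split; [|split; [|split]]; auto.
    + intros w Hw. simpl. rewrite !Hw0 by (auto; apply HW; auto). f_equal; ring.
    + simpl. rewrite Ha1, <- (vadd0l X (vscale X (mkC 0 1) a)), Hval by apply HW.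
      simpl. f_equal; ring.
Qed.

Lemma fd_subspace {F} (A : NormedSpace F) (P : A -> Prop) : fin_dim_subspace A P -> subspace A P.
Proof.
  intros [l Hl]. pose proof (span_subspace A l) as [H0 [Ha Hs]].
  split; [apply Hl; auto|split]; intros; apply Hl; [apply Ha|apply Hs]; apply Hl; auto.
Qed.

Lemma fd_closed {F} (A : NormedSpace F) (P : A -> Prop) : fin_dim_subspace A P -> closedP A P.
Proof.
  intros [l Hl] x Hx. apply Hl. apply span_closed. intros eps He.
  destruct (Hx eps He) as [w [Hw Hd]]. exists w. split; auto. apply Hl; auto.
Qed.

Lemma chain_mono {F} (A : NormedSpace F) V : fd_chain A V -> forall n m x, (n <= m)%nat -> V n x -> V m x.
Proof.
  intros [_ [Hs _]] n m x Hnm Hx. induction Hnm; auto.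
Qed.

Lemma riesz_lemma {F} (X : NormedSpace F) (W U : X -> Prop) (x : X) :
  subspace X W -> closedP X W -> subspace X U -> (forall w, W w -> U w) -> U x -> ~ W x ->
  exists a, U a /\ vnorm X a = 1 /\ forall v, W v -> / 2 <= vnorm X (vadd X a v).
Proof.
  intros HW HWc HU HWU Hx Hnx.
  destruct (closed_dist_pos X W x HWc Hnx) as [del [Hdel Hsep]].
  set (E := fun r => forall w, W w -> r <= vdist X x w).
  destruct (completeness E) as [d [Hub Hlub]].
  { exists (vdist X x (vzero X)). intros r Hr. apply Hr, HW. }
  { exists del. exact Hsep. }
  assert (Hd1 : del <= d) by (apply Hub; exact Hsep).
  assert (Hd2 : forall w, W w -> d <= vdist X x w).
  { intros w Hw. apply Hlub. intros r Hr. apply Hr; auto. }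
  assert (Hw0 : exists w0, W w0 /\ vdist X x w0 < 2 * d).
  { apply NNPP. intro Hno. assert (2 * d <= d); [|lra]. apply Hub. intros w Hw.
    apply Rnot_lt_le. intro Hlt. apply Hno. exists w; auto. }
  destruct Hw0 as [w0 [Hw0 Hw0d]].
  set (D := vdist X x w0). assert (HD : d <= D) by (apply Hd2; auto).
  assert (HDinv : 0 < / D) by (apply Rinv_0_lt_compat; lra).
  exists (rscale X (/ D) (vsub X x w0)). split; [|split].
  - apply (proj2 (proj2 HU)), subspace_sub; auto.
  - rewrite vnorm_rscale. change (vnorm X (vsub X x w0)) with D.
    rewrite Rabs_right by lra. field; lra.
  - intros v Hv.
    assert (E1 : vadd X (rscale X (/ D) (vsub X x w0)) v =
                 rscale X (/ D) (vsub X x (vsub X w0 (rscale X D v)))).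
    { unfold vsub. rewrite (vopp_add X w0), vopp_opp, (vaddA _ X x),
        (rscale_add_r X (/ D) (vadd X x (vopp X w0)) (rscale X D v)), rscale_mul.
      rewrite Rinv_l by lra. rewrite rscale_one. reflexivity. }
    rewrite E1, vnorm_rscale, Rabs_right by lra.
    assert (Hw : W (vsub X w0 (rscale X D v))).
    { apply subspace_sub; auto. apply HW; auto. }
    pose proof (Hd2 _ Hw) as Hdw. unfold vdist in Hdw.
    fold (vsub X x (vsub X w0 (rscale X D v))) in Hdw.
    apply Rmult_le_reg_l with D; [lra|]. rewrite <- Rmult_assoc, Rinv_r by lra.
    assert (D < 2 * d) by exact Hw0d. lra.
Qed.

Lemma chain_riesz {F} (A : NormedSpace F) V : fd_chain A V -> forall p,
  exists a, V (S p) a /\ vnorm A a = 1 /\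
    forall w c, V p w -> sabs c <= 2 * vnorm A (vadd A w (vscale A c a)).
Proof.
  intros HV p. pose proof HV as [Hfd [Hs Hstr]].
  pose proof (fd_subspace A _ (Hfd p)) as HWp.
  destruct (Hstr p) as [x [Hx1 Hx0]].
  destruct (riesz_lemma A (V p) (V (S p)) x HWp (fd_closed A _ (Hfd p))
              (fd_subspace A _ (Hfd (S p))) (Hs p) Hx1 Hx0) as [a [Ha1 [Ha2 Ha3]]].
  exists a. split; [auto|split; auto]. intros w c Hw.
  assert (Hsep : forall w, V p w -> / 2 <= vdist A a w).
  { intros w' Hw'. unfold vdist. apply Ha3, subspace_opp; auto. }
  pose proof (norm_comb_ge A (V p) a (/ 2) HWp Hsep w c Hw). lra.
Qed.

Lemma chain_biorthogonal_system {F} (A : NormedSpace F) V : fd_chain A V ->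
  exists (a : nat -> A) (f : nat -> A -> scal F),
    (forall p, V (S p) (a p)) /\ (forall p, vnorm A (a p) = 1) /\
    (forall p, linear_functional A (f p)) /\ (forall p, bounded_by A (f p) 4) /\
    (forall p w, V p w -> f p w = szero F) /\ (forall p, f p (a p) = sone F).
Proof.
  intro Hch.
  assert (Hpair : forall p, exists af : A * (A -> scal F),
            V (S p) (fst af) /\ vnorm A (fst af) = 1 /\ linear_functional A (snd af) /\
            bounded_by A (snd af) 4 /\ (forall w, V p w -> snd af w = szero F) /\
            snd af (fst af) = sone F).
  { intro p. destruct (chain_riesz A V Hch p) as [a [Ha1 [Ha2 Ha3]]].
    destruct (hahn_banach_point A (V p) a 2) as [f [Hf1 [Hf2 [Hf3 Hf4]]]];
      [lra | apply fd_subspace, (proj1 Hch) | exact Ha3 |].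
    exists (a, f). simpl. replace 4 with (2 * 2) by ring. tauto. }
  destruct (choice _ Hpair) as [af Haf].
  exists (fun p => fst (af p)), (fun p => snd (af p)).
  repeat split; intros; apply Haf; auto.
Qed.

Lemma half_unit_norming_functional {F} (B : NormedSpace F) :
  (exists b : B, b <> vzero B) ->
  exists (b : B) (g : B -> scal F), vnorm B b = / 2 /\ linear_functional B g /\
    bounded_by B g 4 /\ g b = sone F.
Proof.
  intros [b1 Hb1].
  assert (Hb1p : 0 < vnorm B b1).
  { destruct (vnorm_ge0 _ B b1); auto. exfalso. apply Hb1, vnorm_eq0. auto. }
  set (b := rscale B (/ (2 * vnorm B b1)) b1).
  assert (Hb : vnorm B b = / 2).
  { unfold b. rewrite vnorm_rscale, Rabs_right; [field; lra|].
    apply Rle_ge. left. apply Rinv_0_lt_compat. lra. }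
  destruct (hahn_banach_point B (fun x => x = vzero B) b 2) as [g [Hgl [Hgb [_ Hg1]]]].
  - lra.
  - split; [reflexivity|split]; intros; subst; [apply vadd0| apply vscale_zero_v].
  - intros w c Hw. subst. rewrite vadd0l, vnorm_scale, Hb. pose proof (sabs_ge0 F c). lra.
  - exists b, g. replace 4 with (2 * 2) by ring. tauto.
Qed.

Lemma glb_exists (S : R -> Prop) : (exists s, S s) -> (forall s, S s -> 0 <= s) -> exists e, is_glb S e.
Proof.
  intros [s0 Hs0] Hlb.
  destruct (completeness (fun v => S (- v))) as [m [Hub Hlub]].
  { exists 0. intros v Hv. apply Hlb in Hv. lra. }
  { exists (- s0). rewrite Ropp_involutive. auto. }
  exists (- m). split.
  - intros s Hs. assert (- s <= m) by (apply Hub; rewrite Ropp_involutive; auto). lra.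
  - intros m' Hm'. assert (m <= - m').
    { apply Hlub. intros v Hv. apply Hm' in Hv. lra. }
    lra.
Qed.

Lemma En_glb {F} (A B : NormedSpace F) V X iota n x :
  is_glb (fun r => exists u : tens A B,
            (forall p, In p u -> V n (fst p)) /\ r = vdist X x (iota u))
         (En A B V X iota n x).
Proof.
  unfold En, Rinf. apply epsilon_spec, glb_exists.
  - exists (vdist X x (iota nil)), nil. split; auto. intros p [].
  - intros s [u [_ E]]. subst. apply vdist_ge0.
Qed.

Lemma En_le {F} (A B : NormedSpace F) V X iota n x u :
  (forall p, In p u -> V n (fst p)) -> En A B V X iota n x <= vdist X x (iota u).
Proof. intro H. apply (proj1 (En_glb A B V X iota n x)). exists u. auto. Qed.

Lemma En_ge {F} (A B : NormedSpace F) V X iota n x L :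
  (forall u, (forall p, In p u -> V n (fst p)) -> L <= vdist X x (iota u)) ->
  L <= En A B V X iota n x.
Proof.
  intro H. apply (proj2 (En_glb A B V X iota n x)). intros s [u [Hu E]]. subst. auto.
Qed.

Lemma rpow_nonneg e p : 0 <= rpow e p.
Proof. unfold rpow. destruct (Rle_dec e 0); [lra|]. unfold Rpower. left; apply exp_pos. Qed.

Lemma rpow_pos_eq e p : 0 < e -> rpow e p = exp (p * ln e).
Proof. intro H. unfold rpow. destruct (Rle_dec e 0); [lra|]. reflexivity. Qed.

Lemma exp_m1_lt_half : exp (-1) < / 2.
Proof.
  replace (exp (-1)) with (/ exp 1) by (rewrite <- exp_Ropp; f_equal; ring).
  apply Rinv_lt_contravar; [pose proof (exp_pos 1); lra|].
  pose proof (exp_ineq1 1 ltac:(lra)). lra.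
Qed.

Lemma io_or (P Q : nat -> Prop) :
  (forall N, exists n, (N <= n)%nat /\ (P n \/ Q n)) ->
  (forall N, exists n, (N <= n)%nat /\ P n) \/ (forall N, exists n, (N <= n)%nat /\ Q n).
Proof.
  intro H. destruct (classic (forall N, exists n, (N <= n)%nat /\ P n)) as [|HP]; [left; auto|right].
  apply not_all_ex_not in HP. destruct HP as [N0 HN0].
  intro N. destruct (H (N0 + N)%nat) as [n [Hn [HPn|HQn]]].
  - exfalso. apply HN0. exists n. split; [lia|auto].
  - exists n. split; [lia|auto].
Qed.

Lemma liminf_rpow_max (e phi1 phi2 : nat -> R) :
  liminf_lt (fun n => rpow (e n) (Rmax (phi1 n) (phi2 n))) 1 ->
  liminf_lt (fun n => rpow (e n) (phi1 n)) 1 \/ liminf_lt (fun n => rpow (e n) (phi2 n)) 1.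
Proof.
  intros [r [Hr Hio]].
  destruct (io_or (fun n => rpow (e n) (phi1 n) < r) (fun n => rpow (e n) (phi2 n) < r)) as [H|H].
  - intro N. destruct (Hio N) as [n [Hn Hu]]. exists n. split; auto.
    destruct (Rle_dec (phi1 n) (phi2 n)).
    + rewrite Rmax_right in Hu by lra. auto.
    + rewrite Rmax_left in Hu by lra. auto.
  - left. exists r. split; auto.
  - right. exists r. split; auto.
Qed.

(* As [psi n <= C * phi n], whenever [e n < 1] we get [e n ^ phi n <= (e n ^ psi n) ^ (1/C)],
   so the bound [r < 1] becomes [r ^ (1/C) < 1]. *)
Lemma liminf_rpow_bigO (e psi phi : nat -> R) (C : R) :
  0 < C -> (forall n, 0 < phi n) -> (forall n, 0 < psi n) -> (forall n, psi n <= C * phi n) ->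
  liminf_lt (fun n => rpow (e n) (psi n)) 1 -> liminf_lt (fun n => rpow (e n) (phi n)) 1.
Proof.
  intros HC Hphi Hpsi Hle [r [Hr Hio]].
  set (r0 := Rmax r (/ 2)).
  assert (Hr0 : / 2 <= r0 < 1) by (unfold r0; split; [apply Rmax_r| apply Rmax_lub_lt; lra]).
  exists (exp (ln r0 / C)). split.
  - rewrite <- exp_0. apply exp_increasing. apply Rdiv_neg_pos; auto. rewrite <- ln_1.
    apply ln_increasing; lra.
  - intro N. destruct (Hio N) as [n [Hn Hu]]. exists n. split; auto.
    assert (Hu0 : rpow (e n) (psi n) < r0) by (pose proof (Rmax_l r (/2)); unfold r0; lra).
    unfold rpow in *. destruct (Rle_dec (e n) 0); [apply exp_pos|].
    unfold Rpower in *. apply exp_increasing.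
    assert (psi n * ln (e n) < ln r0).
    { rewrite <- (ln_exp (psi n * ln (e n))). apply ln_increasing; auto. apply exp_pos. }
    assert (ln r0 < 0). { rewrite <- ln_1. apply ln_increasing; lra. }
    assert (Hln : ln (e n) < 0). { specialize (Hpsi n). nra. }
    specialize (Hle n). specialize (Hphi n). specialize (Hpsi n).
    apply Rmult_lt_reg_r with C; auto.
    replace (ln r0 / C * C) with (ln r0) by (field; lra).
    nra.
Qed.

Lemma liminf_rpow_io_small (e psi : nat -> R) :
  (forall n, 0 < psi n) -> (forall N, exists n, (N <= n)%nat /\ e n <= exp (- / psi n)) ->
  liminf_lt (fun n => rpow (e n) (psi n)) 1.
Proof.
  intros Hpsi Hio. exists (/ 2). split; [lra|]. intro N.
  destruct (Hio N) as [n [Hn He]]. exists n. split; auto.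
  unfold rpow. destruct (Rle_dec (e n) 0); [lra|]. unfold Rpower.
  eapply Rle_lt_trans; [|apply exp_m1_lt_half].
  assert (Hln : ln (e n) <= - / psi n).
  { rewrite <- (ln_exp (- / psi n)).
    destruct (Req_dec (e n) (exp (- / psi n))) as [E|E]; [rewrite E; lra|].
    left. apply ln_increasing; lra. }
  pose proof (Hpsi n).
  apply Rmult_le_compat_l with (r := psi n) in Hln; [|lra].
  replace (psi n * - / psi n) with (-1) in Hln by (field; lra).
  destruct Hln as [Hlt|Heq]; [left; apply exp_increasing; exact Hlt | rewrite Heq; lra].
Qed.

Lemma inc_nat_le (m : nat -> nat) :
  (forall k, (m k < m (S k))%nat) -> forall j k, (j <= k)%nat -> (m j <= m k)%nat.
Proof. intros H j k Hjk. induction Hjk; auto. specialize (H m0). lia. Qed.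

Lemma inc_nat_ge_id (m : nat -> nat) : (forall k, (m k < m (S k))%nat) -> forall k, (k <= m k)%nat.
Proof. intros H k. induction k; [lia|]. specialize (H k). lia. Qed.

Lemma inc_nat_block (m : nat -> nat) : (forall k, (m k < m (S k))%nat) -> forall K n, (m K <= n)%nat ->
  exists k, (K <= k)%nat /\ (m k <= n)%nat /\ (n < m (S k))%nat.
Proof.
  intros H K n Hn.
  assert (Hd : forall d, (n < m (K + d))%nat ->
            exists k, (K <= k)%nat /\ (m k <= n)%nat /\ (n < m (S k))%nat).
  { induction d as [|d IH]; intro Hd.
    - rewrite Nat.add_0_r in Hd. lia.
    - destruct (Nat.lt_ge_cases n (m (K + d)%nat)) as [Hl|Hg]; auto.
      exists (K + d)%nat. split; [lia|split; auto].
      replace (S (K + d)%nat) with (K + S d)%nat by lia. auto. }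
  apply (Hd (S n)). pose proof (inc_nat_ge_id m H (K + S n)). lia.
Qed.

(* On each block [m k <= n < m (k+1)] the lower bound [e n >= exp (-1/psi (m k)) / 20]
   gives [e n ^ phi n >= exp (- phi (m k) / psi (m k) - phi n ln 20)], and both terms in
   the exponent tend to 0. *)
Lemma not_liminf_rpow_blocks (e phi psi : nat -> R) (m : nat -> nat) :
  scale_fn phi -> (forall n, 0 < psi n) -> (forall k, (m k < m (S k))%nat) ->
  (forall k, (INR k + 1) * phi (m k) < psi (m k)) ->
  (forall k n, (m k <= n)%nat -> (n < m (S k))%nat -> exp (- / psi (m k)) / 20 <= e n) ->
  ~ liminf_lt (fun n => rpow (e n) (phi n)) 1.
Proof.
  intros [Hfp [Hfm Hfz]] Hpp Hmi Hmr Hlow [r [Hr Hio]].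
  destruct (Rle_dec r 0) as [Hr0|Hr0].
  { destruct (Hio 0%nat) as [n [_ Hn]]. pose proof (rpow_nonneg (e n) (phi n)). lra. }
  set (eps := - ln r).
  assert (Heps : 0 < eps).
  { unfold eps. assert (ln r < ln 1) by (apply ln_increasing; lra). rewrite ln_1 in H. lra. }
  destruct (inv_small (eps / 2)) as [K0 HK0]; [lra|].
  assert (Hl20 : 0 < ln 20) by (rewrite <- ln_1; apply ln_increasing; lra).
  destruct (Hfz (eps / (2 * ln 20))) as [N1 HN1]. { apply Rdiv_lt_0_compat; lra. }
  destruct (Hio (m (K0 + N1)%nat)) as [n [Hn Hrn]].
  destruct (inc_nat_block m Hmi (K0 + N1)%nat n Hn) as [k [Hk1 [Hk2 Hk3]]].
  pose proof (Hlow k n Hk2 Hk3) as Hl. pose proof (exp_pos (- / psi (m k))) as Hck.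
  assert (HE : 0 < e n) by lra.
  rewrite rpow_pos_eq in Hrn by auto.
  assert (Hln : ln (exp (- / psi (m k)) / 20) <= ln (e n)).
  { destruct (Req_dec (exp (- / psi (m k)) / 20) (e n)) as [Q|Q]; [rewrite Q; lra|].
    left. apply ln_increasing; lra. }
  unfold Rdiv in Hln. rewrite ln_mult, ln_Rinv, ln_exp in Hln by lra.
  pose proof (Hfp n) as Hphin. pose proof (Hfm (m k) n Hk2) as Hphimon.
  pose proof (Hmr k) as Hrat. pose proof (Hpp (m k)) as Hpsik. pose proof (Hfp (m k)) as Hphik.
  assert (Hr1 : phi (m k) * / psi (m k) < eps / 2).
  { apply Rlt_le_trans with (/ (INR k + 1)); [|left; apply HK0; lia].
    pose proof (pos_INR k).
    apply (Rmult_lt_reg_r (psi (m k) * (INR k + 1))); [nra|].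
    replace (phi (m k) * / psi (m k) * (psi (m k) * (INR k + 1)))
      with ((INR k + 1) * phi (m k)) by (field; lra).
    replace (/ (INR k + 1) * (psi (m k) * (INR k + 1))) with (psi (m k)) by (field; lra). lra. }
  assert (Hr2 : phi n * ln 20 < eps / 2).
  { specialize (HN1 n ltac:(pose proof (inc_nat_ge_id m Hmi k); lia)).
    apply (Rmult_lt_compat_r (ln 20)) in HN1; auto.
    replace (eps / (2 * ln 20) * ln 20) with (eps / 2) in HN1 by (field; lra). lra. }
  assert (Hkey : - eps < phi n * ln (e n)).
  { assert (phi n * (- / psi (m k) + - ln 20) <= phi n * ln (e n))
      by (apply Rmult_le_compat_l; lra).
    assert (phi n * / psi (m k) <= phi (m k) * / psi (m k)).
    { apply Rmult_le_compat_r; auto. left. apply Rinv_0_lt_compat; auto. }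
    lra. }
  assert (Hfin : exp (- eps) < exp (phi n * ln (e n))) by (apply exp_increasing; auto).
  unfold eps in Hfin. rewrite Ropp_involutive, exp_ln in Hfin by lra. lra.
Qed.

Lemma not_bigO_io (psi phi : nat -> R) : (forall n, 0 < phi n) -> (forall n, 0 < psi n) ->
  (forall C, exists n, C * phi n < psi n) -> forall C N, exists n, (N <= n)%nat /\ C * phi n < psi n.
Proof.
  intros Hphi Hpsi H C N. revert C. induction N as [|N IH]; intro C.
  - destruct (H C) as [n Hn]. exists n. split; [lia|exact Hn].
  - destruct (IH (Rabs C + psi N / phi N)) as [n [Hn Hlt]].
    pose proof (Hphi n). pose proof (Hphi N). pose proof (Hpsi N).
    pose proof (Rle_abs C). pose proof (Rabs_pos C).
    assert (Hq : 0 < psi N / phi N) by (apply Rdiv_lt_0_compat; auto).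
    assert (Hne : n <> N).
    { intro E. subst n.
      replace ((Rabs C + psi N / phi N) * phi N) with (Rabs C * phi N + psi N) in Hlt
        by (field; lra).
      nra. }
    exists n. split; [lia|]. nra.
Qed.

Lemma select_seq (psi phi : nat -> R) : scale_fn psi -> scale_fn phi ->
  (forall C, exists n, C * phi n < psi n) ->
  exists m : nat -> nat, (forall k, (m k < m (S k))%nat) /\
    (forall k, (INR k + 1) * phi (m k) < psi (m k)) /\
    (forall k, / psi (m k) + ln 64 <= / psi (m (S k))).
Proof.
  intros [Hpp [Hpm Hpz]] [Hfp [Hfm Hfz]] Hbig.
  pose proof (not_bigO_io psi phi Hfp Hpp Hbig) as Hio.
  assert (Hstep : forall k m, exists n, (m < n)%nat /\ (INR (S k) + 1) * phi n < psi n /\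
                     / psi m + ln 64 <= / psi n).
  { intros k m.
    assert (Hpos : 0 < / psi m + ln 64).
    { pose proof (Rinv_0_lt_compat _ (Hpp m)).
      assert (0 < ln 64) by (rewrite <- ln_1; apply ln_increasing; lra). lra. }
    destruct (Hpz (/ (/ psi m + ln 64))) as [N0 HN0]. { apply Rinv_0_lt_compat; auto. }
    destruct (Hio (INR (S k) + 1) (S m + N0)%nat) as [n [Hn Hr]].
    exists n. split; [lia|split; auto].
    specialize (HN0 n ltac:(lia)). pose proof (Hpp n).
    rewrite <- (Rinv_inv (/ psi m + ln 64)). apply Rlt_le. apply Rinv_lt_contravar; auto.
    apply Rmult_lt_0_compat; auto. apply Rinv_0_lt_compat; auto. }
  destruct (choice (fun km n => (snd km < n)%nat /\ (INR (S (fst km)) + 1) * phi n < psi n /\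
                     / psi (snd km) + ln 64 <= / psi n)) as [st Hst].
  { intros [k m]. apply Hstep. }
  destruct (Hbig 1) as [m0 Hm0].
  set (m := fix m (k : nat) : nat := match k with O => m0 | S k' => st (k', m k') end).
  exists m. split; [|split].
  - intro k. simpl. apply (Hst (k, m k)).
  - intro k. destruct k as [|k].
    + simpl. replace (0 + 1) with 1 by ring. exact Hm0.
    + simpl m. apply (Hst (k, m k)).
  - intro k. simpl. apply (Hst (k, m k)).
Qed.

Lemma tsum_app {F} {A B : NormedSpace F} (f : A -> B -> scal F) (u v : tens A B) :
  tsum f (u ++ v) = sadd (tsum f u) (tsum f v).
Proof.
  induction u as [|q u IH]; simpl.
  - rewrite sadd_zero_l. reflexivity.
  - unfold tsum in *. simpl. rewrite IH. apply sadd_assoc.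
Qed.

Lemma tsum_cons {F} {A B : NormedSpace F} (f : A -> B -> scal F) (q : A * B) (u : tens A B) :
  tsum f (q :: u) = sadd (f (fst q) (snd q)) (tsum f u).
Proof. reflexivity. Qed.

Lemma tsum_tscale_ker {F} {A B : NormedSpace F} (f : A -> scal F) (g : B -> scal F) c (u : tens A B) :
  linear_functional A f -> (forall q, In q u -> f (fst q) = szero F) ->
  tsum (fun a b => smul (f a) (g b)) (tscale c u) = szero F.
Proof.
  intros [_ Hfs] Hu. induction u as [|q u IH]; [reflexivity|].
  change (tscale c (q :: u)) with ((vscale A c (fst q), snd q) :: tscale c u).
  rewrite tsum_cons, IH by (intros; apply Hu; right; auto). simpl.
  rewrite Hfs, Hu by (left; auto). rewrite smul_zero_r, smul_zero_l. apply sadd_zero_l.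
Qed.

Lemma vdist_add_self {F} (X : NormedSpace F) (s d : X) : vdist X (vadd X s d) s = vnorm X d.
Proof. unfold vdist. rewrite <- vaddA, (vaddC _ X d), vaddA, vaddN, vadd0l. reflexivity. Qed.

Lemma le_eps (a b : R) : (forall eps, 0 < eps -> a < b + eps) -> a <= b.
Proof. intro H. apply Rnot_lt_le. intro K. specialize (H (a - b)). lra. Qed.

Section Lethargy.

Variables (F : Fld) (A B : NormedSpace F) (V : nat -> A -> Prop).
Variables (alpha : tens A B -> R) (X : NormedSpace F) (iota : tens A B -> X).
Hypothesis chainV : fd_chain A V.
Hypothesis crossnorm : reasonable_crossnorm A B alpha.
Hypothesis compl : completion A B alpha X iota.

Variables (a : nat -> A) (f : nat -> A -> scal F).
Hypothesis a_in : forall p, V (S p) (a p).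
Hypothesis a_unit : forall p, vnorm A (a p) = 1.
Hypothesis f_lin : forall p, linear_functional A (f p).
Hypothesis f_bound : forall p, bounded_by A (f p) 4.
Hypothesis f_ker : forall p w, V p w -> f p w = szero F.
Hypothesis f_a : forall p, f p (a p) = sone F.

(* With norm 1/2 each partial sum is within (32/63) c_(K+1) < c_(K+1) of y. *)
Variables (b : B) (g : B -> scal F).
Hypothesis b_half : vnorm B b = / 2.
Hypothesis g_lin : linear_functional B g.
Hypothesis g_bound : bounded_by B g 4.
Hypothesis g_b : g b = sone F.

Variables (c : nat -> R) (q : nat -> nat).
Hypothesis c_pos : forall k, 0 < c k.
Hypothesis c_fast : forall k, c (S k) <= c k / 64.
Hypothesis q_inc : forall k, (q k < q (S k))%nat.

Definition lethargy_term (k : nat) : A * B := (rscale A (c k) (a (q k)), b).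

Fixpoint lethargy_sum (K : nat) : tens A B :=
  match K with
  | O => lethargy_term O :: nil
  | S K' => lethargy_sum K' ++ lethargy_term (S K') :: nil
  end.

Lemma c_antitone i j : (i <= j)%nat -> c j <= c i.
Proof. intro Hij. induction Hij; [lra|]. pose proof (c_fast m). pose proof (c_pos m). lra. Qed.

Lemma c_le_inv k : c k <= c O / (INR k + 1).
Proof.
  induction k as [|k IH].
  - simpl. lra.
  - pose proof (c_fast k). pose proof (pos_INR k). pose proof (c_pos O). rewrite S_INR.
    apply Rle_trans with (c O / (INR k + 1) / 64); [lra|].
    unfold Rdiv. rewrite Rmult_assoc, <- Rinv_mult.
    apply Rmult_le_compat_l; [lra|]. apply Rinv_le_contravar; lra.
Qed.

Lemma lethargy_term_in k : V (S (q k)) (fst (lethargy_term k)).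
Proof. apply (fd_subspace A _ (proj1 chainV (S (q k)))), a_in. Qed.

Lemma lethargy_sum_in K p : In p (lethargy_sum K) -> V (S (q K)) (fst p).
Proof.
  revert p. induction K as [|K IH]; intros p Hp.
  - destruct Hp as [E|[]]. subst. apply lethargy_term_in.
  - apply in_app_or in Hp. destruct Hp as [Hp|[E|[]]].
    + apply (chain_mono A V chainV (S (q K))); [specialize (q_inc K); lia|]. auto.
    + subst. apply lethargy_term_in.
Qed.

Lemma lethargy_sum_step K :
  vdist X (iota (lethargy_sum (S K))) (iota (lethargy_sum K)) <= c (S K) / 2.
Proof.
  destruct compl as [_ [Hiapp [_ [Hinorm _]]]].
  change (lethargy_sum (S K)) with (lethargy_sum K ++ lethargy_term (S K) :: nil).
  rewrite Hiapp, vdist_add_self, Hinorm.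
  eapply Rle_trans; [apply (proj1 (proj2 crossnorm))|].
  unfold lethargy_term. simpl. rewrite b_half, vnorm_rscale, a_unit.
  rewrite Rabs_right by (left; apply c_pos). lra.
Qed.

Lemma lethargy_sum_cauchy L K : (L <= K)%nat ->
  vdist X (iota (lethargy_sum K)) (iota (lethargy_sum L)) <= 32 / 63 * c (S L).
Proof.
  assert (Hd : forall d, vdist X (iota (lethargy_sum (L + d)%nat)) (iota (lethargy_sum L))
                         <= 32 / 63 * (c (S L) - c (S (L + d)))).
  { induction d as [|d IH].
    - rewrite Nat.add_0_r, vdist_self. lra.
    - replace (L + S d)%nat with (S (L + d)) by lia.
      eapply Rle_trans; [apply (vdist_tri X _ (iota (lethargy_sum (L + d)%nat)))|].
      pose proof (lethargy_sum_step (L + d)%nat). pose proof (c_fast (S (L + d))). lra. }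
  intro HLK. replace K with (L + (K - L))%nat by lia.
  pose proof (Hd (K - L)%nat). pose proof (c_pos (S (L + (K - L)))). lra.
Qed.

Lemma lethargy_limit :
  exists y, forall L, vdist X y (iota (lethargy_sum L)) <= 32 / 63 * c (S L).
Proof.
  destruct (proj1 compl (fun K => iota (lethargy_sum K))) as [y Hy].
  - intros eps He. destruct (inv_small (eps / (c O + 1))) as [N HN].
    { pose proof (c_pos O). apply Rdiv_lt_0_compat; lra. }
    exists N.
    assert (Hsmall : forall L K, (N <= L)%nat -> (L <= K)%nat ->
              vdist X (iota (lethargy_sum K)) (iota (lethargy_sum L)) < eps).
    { intros L K HL HLK. eapply Rle_lt_trans; [apply lethargy_sum_cauchy; auto|].
      pose proof (c_antitone N (S L) ltac:(lia)). pose proof (c_le_inv N).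
      pose proof (HN N (le_n N)). pose proof (c_pos O). pose proof (c_pos (S L)).
      assert (c O / (INR N + 1) < eps).
      { apply Rle_lt_trans with ((c O + 1) * / (INR N + 1)).
        - unfold Rdiv. apply Rmult_le_compat_r; [left; apply Rinv_0_lt_compat|];
            pose proof (pos_INR N); lra.
        - apply (Rmult_lt_compat_l (c O + 1)) in H1; [|lra].
          replace ((c O + 1) * (eps / (c O + 1))) with eps in H1 by (field; lra). lra. }
      lra. }
    intros i j Hi Hj. destruct (Nat.le_ge_cases i j).
    + rewrite vdist_sym. auto.
    + auto.
  - exists y. intro L. apply le_eps. intros eps He. destruct (Hy eps He) as [N HN].
    pose proof (HN (N + L)%nat ltac:(lia)).
    pose proof (lethargy_sum_cauchy L (N + L)%nat ltac:(lia)).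
    pose proof (vdist_tri X y (iota (lethargy_sum (N + L)%nat)) (iota (lethargy_sum L))).
    rewrite vdist_sym in H. lra.
Qed.

Lemma lethargy_sum_functional k :
  sre F (tsum (fun x z => smul (f (q k) x) (g z)) (lethargy_sum k)) = c k.
Proof.
  set (Phi := fun x z => smul (f (q k) x) (g z)).
  assert (Hterm : forall j, Phi (fst (lethargy_term j)) (snd (lethargy_term j)) =
                            smul (smul (emb F (c j)) (f (q k) (a (q j)))) (sone F)).
  { intro j. unfold Phi, lethargy_term, rscale; simpl. rewrite (proj2 (f_lin (q k))), g_b.
    reflexivity. }
  assert (Hvanish : forall j, (j < k)%nat -> Phi (fst (lethargy_term j)) (snd (lethargy_term j)) = szero F).
  { intros j Hj. rewrite Hterm, f_ker, smul_zero_r, smul_zero_l; [reflexivity|].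
    apply (chain_mono A V chainV (S (q j))); [|apply a_in].
    pose proof (inc_nat_le q q_inc (S j) k Hj). pose proof (q_inc j). lia. }
  assert (Hbelow : forall K, (K < k)%nat -> tsum Phi (lethargy_sum K) = szero F).
  { induction K as [|K IH]; intro HK; simpl lethargy_sum.
    - rewrite tsum_cons, Hvanish by auto. apply sadd_zero_l.
    - rewrite tsum_app, IH, tsum_cons, Hvanish by lia. rewrite !sadd_zero_l. reflexivity. }
  assert (Hlast : sre F (Phi (fst (lethargy_term k)) (snd (lethargy_term k))) = c k).
  { rewrite Hterm, f_a, smul_one_r, smul_one_r. apply sre_emb. }
  destruct k as [|k']; simpl lethargy_sum.
  - rewrite tsum_cons, sre_add, Hlast. simpl. rewrite sre_zero. ring.
  - rewrite tsum_app, Hbelow, tsum_cons, !sre_add, Hlast by lia. simpl. rewrite sre_zero. ring.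
Qed.

Lemma lethargy_lower y : (forall L, vdist X y (iota (lethargy_sum L)) <= 32 / 63 * c (S L)) ->
  forall k n, (n <= q k)%nat -> c k / 20 <= En A B V X iota n y.
Proof.
  intros Hy k n Hn. apply En_ge. intros u Hu.
  destruct compl as [_ [Hiapp [Hisc [Hinorm _]]]].
  set (Phi := fun x z => smul (f (q k) x) (g z)).
  set (w := lethargy_sum k ++ tscale (emb F (-1)) u).
  pose proof (proj2 (proj2 crossnorm) (f (q k)) g 4 4 (f_lin (q k)) g_lin (f_bound (q k)) g_bound w)
    as Hw. fold Phi in Hw.
  assert (Ealpha : alpha w = vdist X (iota (lethargy_sum k)) (iota u)).
  { rewrite <- Hinorm. unfold w. rewrite Hiapp, Hisc, vscale_m1. reflexivity. }
  assert (Hu0 : tsum Phi (tscale (emb F (-1)) u) = szero F).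
  { apply tsum_tscale_ker; [apply f_lin|]. intros p Hp. apply f_ker.
    apply (chain_mono A V chainV n); auto. }
  (* the functional f_(q k) (x) g sees c_k on the partial sum and nothing on V_n (x) B *)
  assert (Hck : c k <= 16 * vdist X (iota (lethargy_sum k)) (iota u)).
  { rewrite <- Ealpha. replace 16 with (4 * 4) by ring. eapply Rle_trans; [|exact Hw].
    unfold w. rewrite tsum_app, Hu0, sadd_zero_r, <- (lethargy_sum_functional k).
    pose proof (sre_le_abs F (tsum Phi (lethargy_sum k))).
    pose proof (Rle_abs (sre F (tsum Phi (lethargy_sum k)))). fold Phi. lra. }
  pose proof (vdist_tri X (iota (lethargy_sum k)) y (iota u)).
  pose proof (Hy k). rewrite (vdist_sym X y) in H0.
  pose proof (c_fast k). pose proof (c_pos k). pose proof (c_pos (S k)). lra.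
Qed.

Lemma lethargy_upper y : (forall L, vdist X y (iota (lethargy_sum L)) <= 32 / 63 * c (S L)) ->
  forall k, En A B V X iota (S (q k)) y <= c (S k).
Proof.
  intros Hy k. eapply Rle_trans; [apply En_le, lethargy_sum_in|].
  pose proof (Hy k). pose proof (c_pos (S k)). lra.
Qed.

Lemma lethargy_element : exists y,
  (forall k, En A B V X iota (S (q k)) y <= c (S k)) /\
  (forall k n, (n <= q k)%nat -> c k / 20 <= En A B V X iota n y).
Proof.
  destruct lethargy_limit as [y Hy]. exists y.
  split; [apply lethargy_upper | apply lethargy_lower]; exact Hy.
Qed.

End Lethargy.

Lemma completion_of_zero_space F (A B : NormedSpace F) (alpha : tens A B -> R)
  (X : NormedSpace F) (iota : tens A B -> X) :
  reasonable_crossnorm A B alpha -> completion A B alpha X iota ->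
  (forall b : B, b = vzero B) -> forall x : X, x = vzero X.
Proof.
  intros [[Hext [_ [_ [Hsc _]]]] _] [_ [_ [_ [Hnorm Hdense]]]] Hb x.
  assert (Hteq : forall u : tens A B, tens_eq u nil).
  { intros u f [_ [_ [Hadd _]]].
    assert (Hf0 : forall a b, f a b = szero F).
    { intros a b. rewrite (Hb b). apply sadd_self_zero.
      rewrite <- Hadd, vadd0. reflexivity. }
    induction u as [|p u IH]; simpl; auto. rewrite IH, Hf0. apply sadd_zero_l. }
  assert (Hi : forall u, iota u = vzero X).
  { intro u. apply vnorm_eq0. rewrite Hnorm, (Hext u nil (Hteq u)).
    pose proof (Hsc (szero F) nil) as H. simpl in H. rewrite sabs_zero, Rmult_0_l in H. exact H. }
  apply vnorm_eq0, Rle_antisym; [|apply vnorm_ge0]. apply Rnot_lt_le. intro Hp.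
  destruct (Hdense x _ Hp) as [u Hu]. rewrite Hi, vnorm_dist0 in Hu. lra.
Qed.

Lemma Bset_zero_space F (A B : NormedSpace F) (V : nat -> A -> Prop)
  (alpha : tens A B -> R) (X : NormedSpace F) (iota : tens A B -> X) :
  reasonable_crossnorm A B alpha -> completion A B alpha X iota ->
  (forall b : B, b = vzero B) -> forall phi x, Bset A B V X iota phi x.
Proof.
  intros Hrc Hcp Hb phi x.
  pose proof (completion_of_zero_space F A B alpha X iota Hrc Hcp Hb) as H0.
  exists (/ 2). split; [lra|]. intro N. exists N. split; auto.
  assert (En A B V X iota N x <= 0).
  { eapply Rle_trans; [apply (En_le A B V X iota N x nil); intros p []|].
    rewrite (H0 x), (H0 (iota nil)), vdist_self. lra. }
  unfold rpow. destruct (Rle_dec (En A B V X iota N x) 0); [lra|contradiction].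
Qed.

Lemma Bset_exponent_le F (A B : NormedSpace F) V (X : NormedSpace F) (iota : tens A B -> X)
  (phi psi : nat -> R) x :
  (forall n, 0 < phi n) -> (forall n, phi n <= psi n) ->
  Bset A B V X iota phi x -> Bset A B V X iota psi x.
Proof.
  intros Hphi Hle. apply (liminf_rpow_bigO _ phi psi 1); [lra | | auto | intro n; rewrite Rmult_1_l; auto].
  intro n. specialize (Hphi n). specialize (Hle n). lra.
Qed.

Lemma Bset_separation F (A B : NormedSpace F) V (alpha : tens A B -> R) (X : NormedSpace F)
  (iota : tens A B -> X) :
  fd_chain A V -> reasonable_crossnorm A B alpha -> completion A B alpha X iota ->
  (exists b : B, b <> vzero B) ->
  forall psi phi, scale_fn psi -> scale_fn phi -> (forall C, exists n, C * phi n < psi n) ->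
  exists y, Bset A B V X iota psi y /\ ~ Bset A B V X iota phi y.
Proof.
  intros Hch Hrc Hcp Hnt psi phi Hpsi Hphi Hbig.
  destruct (chain_biorthogonal_system A V Hch) as [a [f [Ha1 [Ha2 [Hf1 [Hf2 [Hf3 Hf4]]]]]]].
  destruct (half_unit_norming_functional B Hnt) as [b [g [Hb [Hg1 [Hg2 Hg3]]]]].
  destruct (select_seq psi phi Hpsi Hphi Hbig) as [m [Hmi [Hmr Hmh]]].
  pose proof (proj1 Hpsi) as Hpp.
  set (c := fun k => exp (- / psi (m k))).
  set (q := fun k => pred (m (S k))).
  assert (Hq : forall k, S (q k) = m (S k)) by (intro k; unfold q; specialize (Hmi k); lia).
  assert (Hqi : forall k, (q k < q (S k))%nat).
  { intro k. unfold q. pose proof (Hmi k). pose proof (Hmi (S k)). lia. }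
  assert (Hc64 : forall k, c (S k) <= c k / 64).
  { intro k. specialize (Hmh k).
    replace (c k / 64) with (exp (- / psi (m k) - ln 64)).
    - unfold c. destruct (Req_dec (- / psi (m (S k))) (- / psi (m k) - ln 64)) as [E|E].
      + rewrite E. lra.
      + left. apply exp_increasing. lra.
    - unfold Rminus. rewrite exp_plus, (exp_Ropp (ln 64)), exp_ln by lra. unfold c. field. }
  destruct (lethargy_element F A B V alpha X iota Hch Hrc Hcp a f Ha1 Ha2 Hf1 Hf2 Hf3 Hf4
              b g Hb Hg1 Hg2 Hg3 c q (fun k => exp_pos _) Hc64 Hqi) as [y [Hup Hlow]].
  exists y. split.
  - apply liminf_rpow_io_small; [exact Hpp|]. intro N. exists (m (S N)). split.
    + pose proof (inc_nat_ge_id m Hmi (S N)). lia.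
    + pose proof (Hup N) as H. rewrite Hq in H. exact H.
  - apply (not_liminf_rpow_blocks _ phi psi m Hphi Hpp Hmi Hmr).
    intros k n Hk1 Hk2. apply Hlow. unfold q. lia.
Qed.

Lemma Bset_incl_bigO F (A B : NormedSpace F) V (alpha : tens A B -> R) (X : NormedSpace F)
  (iota : tens A B -> X) psi phi :
  fd_chain A V -> reasonable_crossnorm A B alpha -> completion A B alpha X iota ->
  (exists b : B, b <> vzero B) -> scale_fn psi -> scale_fn phi ->
  (forall y, Bset A B V X iota psi y -> Bset A B V X iota phi y) ->
  exists C, 0 < C /\ forall n, psi n <= C * phi n.
Proof.
  intros Hch Hrc Hcp Hnt Hpsi Hphi Hinc. apply NNPP. intro Hno.
  destruct (Bset_separation F A B V alpha X iota Hch Hrc Hcp Hnt psi phi Hpsi Hphi)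
    as [y [Hy1 Hy2]].
  - intro C. destruct (Rle_dec C 0).
    + exists 0%nat. pose proof (proj1 Hpsi 0%nat). pose proof (proj1 Hphi 0%nat). nra.
    + apply NNPP. intro K. apply Hno. exists C. split; [lra|]. intro k.
      apply Rnot_lt_le. intro K2. apply K. exists k; auto.
  - apply Hy2, Hinc, Hy1.
Qed.

Lemma Bset_min_greatest F (A B : NormedSpace F) V (alpha : tens A B -> R) (X : NormedSpace F)
  (iota : tens A B -> X) psi phi1 phi2 :
  fd_chain A V -> reasonable_crossnorm A B alpha -> completion A B alpha X iota ->
  scale_fn psi -> scale_fn phi1 -> scale_fn phi2 ->
  (forall y, Bset A B V X iota psi y -> Bset A B V X iota phi1 y) ->
  (forall y, Bset A B V X iota psi y -> Bset A B V X iota phi2 y) ->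
  forall x, Bset A B V X iota psi x -> Bset A B V X iota (fun n => Rmin (phi1 n) (phi2 n)) x.
Proof.
  intros Hch Hrc Hcp Hpsi Hs1 Hs2 H1 H2 x Hx.
  destruct (classic (exists b : B, b <> vzero B)) as [Hnt|Htr].
  2: { apply (Bset_zero_space F A B V alpha X iota Hrc Hcp).
       intro b. apply NNPP. intro K. apply Htr. exists b; auto. }
  destruct (Bset_incl_bigO F A B V alpha X iota psi phi1 Hch Hrc Hcp Hnt Hpsi Hs1 H1)
    as [C1 [HC1 Hle1]].
  destruct (Bset_incl_bigO F A B V alpha X iota psi phi2 Hch Hrc Hcp Hnt Hpsi Hs2 H2)
    as [C2 [HC2 Hle2]].
  pose proof (proj1 Hs1) as Hp1. pose proof (proj1 Hs2) as Hp2.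
  apply (liminf_rpow_bigO _ psi _ (C1 + C2)); auto.
  - lra.
  - intro n. apply Rmin_glb_lt; auto.
  - apply Hpsi.
  - intro n. specialize (Hle1 n). specialize (Hle2 n). specialize (Hp1 n). specialize (Hp2 n).
    destruct (Rle_dec (phi1 n) (phi2 n)).
    + rewrite Rmin_left by lra. nra.
    + rewrite Rmin_right by lra. nra.
Qed.

Theorem corollary2p3 (F : Fld) (A B : NormedSpace F) (V : nat -> A -> Prop)
  (alpha : tens A B -> R) (X : NormedSpace F) (iota : tens A B -> X) :
  banach A -> separable A -> infinite_dim A ->
  fd_chain A V -> dense_union A V ->
  banach B ->
  reasonable_crossnorm A B alpha ->
  completion A B alpha X iota ->
  forall phi1 phi2 : nat -> R, scale_fn phi1 -> scale_fn phi2 ->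
  let Bs := Bset A B V X iota in
  let phimax := fun n => Rmax (phi1 n) (phi2 n) in
  let phimin := fun n => Rmin (phi1 n) (phi2 n) in
  (* (i) join *)
  (forall x, Bs phimax x <-> Bs phi1 x \/ Bs phi2 x) /\
  (forall psi, scale_fn psi ->
     (forall x, Bs phi1 x -> Bs psi x) -> (forall x, Bs phi2 x -> Bs psi x) ->
     forall x, Bs phimax x -> Bs psi x) /\
  (* (ii) meet *)
  (forall x, Bs phimin x -> Bs phi1 x) /\
  (forall x, Bs phimin x -> Bs phi2 x) /\
  (forall psi, scale_fn psi ->
     (forall x, Bs psi x -> Bs phi1 x) -> (forall x, Bs psi x -> Bs phi2 x) ->
     forall x, Bs psi x -> Bs phimin x) /\
  (forall x, Bs phimin x -> Bs phi1 x /\ Bs phi2 x).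
Proof.
  intros _ _ _ Hch _ _ Hrc Hcp phi1 phi2 Hs1 Hs2 Bs phimax phimin.
  pose proof (proj1 Hs1) as Hp1. pose proof (proj1 Hs2) as Hp2.
  assert (Hjoin : forall x, Bs phimax x <-> Bs phi1 x \/ Bs phi2 x).
  { intro x. split; [apply liminf_rpow_max|].
    intros [H|H]; revert H; apply Bset_exponent_le.
    - exact Hp1.
    - intro n; apply Rmax_l.
    - exact Hp2.
    - intro n; apply Rmax_r. }
  assert (Hmin_pos : forall n, 0 < phimin n) by (intro n; apply Rmin_glb_lt; auto).
  assert (Hmin1 : forall x, Bs phimin x -> Bs phi1 x)
    by (intro x; apply Bset_exponent_le; [exact Hmin_pos | intro n; apply Rmin_l]).
  assert (Hmin2 : forall x, Bs phimin x -> Bs phi2 x)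
    by (intro x; apply Bset_exponent_le; [exact Hmin_pos | intro n; apply Rmin_r]).
  split; [exact Hjoin|]. split.
  { intros psi _ H1 H2 x Hx. apply Hjoin in Hx. destruct Hx; auto. }
  split; [exact Hmin1|]. split; [exact Hmin2|]. split.
  - intros psi Hpsi. apply (Bset_min_greatest F A B V alpha X iota); auto.
  - intros x H. split; auto.
Qed.
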